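(* Let $z_0\in\mathbb{C}$, $r>0$, and let $f$ be harmonic in $D=\{z\in\mathbb{C}:0<|z-z_0|<r\}$ with $$f(z)=\sum_{k=-n}^\infty a_k(z-z_0)^k+\overline{\sum_{k=-n}^\infty b_k(z-z_0)^k}+2A\log|z-z_0|,\qquad z\in D,$$ where $n\ge1$, $A\in\mathbb{C}$ and $|a_{-n}|\neq|b_{-n}|$. For $\eta\in\mathbb{C}$ put $c=\eta-(a_0+\overline{b_0})$, suppose $c\neq0$, and let $\zeta_1,\dots,\zeta_n$ be the $n$ solutions of $$(\zeta-z_0)^n=\frac{|a_{-n}|^2-|b_{-n}|^2}{\overline{a_{-n}}\,c-\overline{b_{-n}}\,\overline{c}}.$$ Then for all $\eta$ with $|c|$ (equivalently $|\eta|$) sufficiently large: (1) there exist exactly $n$ solutions of $f(z)=\eta$ near $z_0$; (2) the set $S=\{\zeta_1,\dots,\zeta_n\}$ is a prediction set for the solutions in (1), i.e., for each $j$ the harmonic Newton iteration for $f-\eta$ started at $\zeta_j$ converges, and $\zeta_j\mapsto H^\infty_{f-\eta}(\zeta_j)$ is a bijection from $S$ onto the set of these $n$ solutions.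
   Context: A harmonic mapping is a function $f$ with $\Delta f=4\partial_{\bar z}\partial_z f=0$, with Wirtinger derivatives $\partial_z=\frac12(\partial_x-i\partial_y)$, $\partial_{\bar z}=\frac12(\partial_x+i\partial_y)$. For a harmonic mapping $F$, the harmonic Newton map is $$H_F(z)=z-\frac{\overline{\partial_zF(z)}\,F(z)-\partial_{\bar z}F(z)\,\overline{F(z)}}{|\partial_zF(z)|^2-|\partial_{\bar z}F(z)|^2},$$ defined where the Jacobian $|\partial_zF|^2-|\partial_{\bar z}F|^2$ is nonzero (this is Newton's method for $F$ viewed as a map $\mathbb{R}^2\to\mathbb{R}^2$). The harmonic Newton iteration is $z_k=H_F(z_{k-1})$, and $H_F^\infty(z_0)=\lim_{k\to\infty}z_k$ when this limit exists. *)

From Stdlib Require Import Reals ZArith List.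
From Coquelicot Require Export Coquelicot.
Open Scope R_scope.

Definition Ci : C := (0, 1)%R.
Definition Czpow (z : C) (k : Z) : C :=
  match k with
  | Z0 => 1%C
  | Zpos p => Cpow z (Pos.to_nat p)
  | Zneg p => Cinv (Cpow z (Pos.to_nat p))
  end.

Definition dx (F : C -> C) (z : C) : C :=
  (Derive (fun t => fst (F (Cplus z (t, 0)))) 0,
   Derive (fun t => snd (F (Cplus z (t, 0)))) 0).
Definition dy (F : C -> C) (z : C) : C :=
  (Derive (fun t => fst (F (Cplus z (0, t)))) 0,
   Derive (fun t => snd (F (Cplus z (0, t)))) 0).

Definition dz (F : C -> C) (z : C) : C :=
  Cmult (RtoC (1/2)) (Cminus (dx F z) (Cmult Ci (dy F z))).
Definition dzbar (F : C -> C) (z : C) : C :=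
  Cmult (RtoC (1/2)) (Cplus (dx F z) (Cmult Ci (dy F z))).

Definition jac (F : C -> C) (z : C) : R :=
  (Cmod (dz F z))^2 - (Cmod (dzbar F z))^2.

(* harmonic Newton map (meaningful where jac F z <> 0) *)
Definition HN (F : C -> C) (z : C) : C :=
  Cminus z
    (Cdiv (Cminus (Cmult (Cconj (dz F z)) (F z)) (Cmult (dzbar F z) (Cconj (F z))))
          (RtoC (jac F z))).

Fixpoint HN_seq (F : C -> C) (z0 : C) (k : nat) : C :=
  match k with
  | O => z0
  | S k' => HN F (HN_seq F z0 k')
  end.

(* the harmonic Newton iteration started at z0 is well defined (Jacobian
   nonzero at every iterate) and converges to L, i.e. H_F^oo(z0) = L *)
Definition HN_converges_to (F : C -> C) (z0 L : C) : Prop :=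
  (forall k, jac F (HN_seq F z0 k) <> 0) /\
  filterlim (HN_seq F z0) eventually (locally L).

(* the k-th term (k = m - n) of the Laurent series sum_{k >= -n} a_k w^k *)
Definition laurent_term (a : Z -> C) (n : nat) (w : C) (m : nat) : C :=
  Cmult (a (Z.of_nat m - Z.of_nat n)%Z) (Czpow w (Z.of_nat m - Z.of_nat n)%Z).

(* Near [z0] the equation [f z = eta] is dominated by
   [a_(-n) / (z - z0)^n + conj (b_(-n) / (z - z0)^n) = c], whose solutions are exactly the
   [n] points [zeta] with [(zeta - z0)^n = w]; all other terms of [f] are smaller by a factor
   [O(sqrt |z - z0|)].  A Newton-Kantorovich theorem for the harmonic Newton map (a quadratic
   remainder bound [K], a Jacobian bounded away from zero by [1/M], a small initial residual)
   shows that the iteration started at each such [zeta] converges to a solution within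
   [lam |zeta - z0|] of [zeta], the only one there.  Conversely, for every solution [z] in a
   small punctured disc, [1 / (z - z0)^n] is close to [1 / w], so [z] lies in one of these
   Newton balls.  Distinct [n]-th roots of [w] are [|w|^(1/n) / n] apart while the balls have
   radius [lam |w|^(1/n)] with [2 n lam < 1], so predictions and solutions are in bijection. *)

From Stdlib Require Import Reals ZArith List Lra Lia Psatz ClassicalEpsilon.
From Coquelicot Require Import Coquelicot.
Open Scope R_scope.
Set Bullet Behavior "Strict Subproofs".

Lemma im_le_Cmod (z : C) : Rabs (Im z) <= Cmod z.
Proof.
  destruct z as [x y]. unfold Cmod, Im; simpl.
  rewrite <- sqrt_Rsqr_abs. apply sqrt_le_1_alt. unfold Rsqr. nra.
Qed.

Lemma Cmod_reverse_triangle (u v : C) : Cmod u - Cmod v <= Cmod (u + v).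
Proof.
  assert (H := Cmod_triangle (u + v) (- v)).
  replace (u + v + - v)%C with u in H by ring. rewrite Cmod_opp in H. lra.
Qed.

Lemma Cmod_sub_triangle (x y z : C) : Cmod (x - z) <= Cmod (x - y) + Cmod (y - z).
Proof. replace (x - z)%C with ((x - y) + (y - z))%C by ring. apply Cmod_triangle. Qed.

Lemma Cmod_add_conj_lower (a b d : C) :
  Rabs (Cmod a - Cmod b) * Cmod d <= Cmod (a * d + b * Cconj d).
Proof.
  assert (H1 := Cmod_reverse_triangle (a * d) (b * Cconj d)).
  assert (H2 := Cmod_reverse_triangle (b * Cconj d) (a * d)).
  rewrite !Cmod_mult, Cmod_conj in *. rewrite Cplus_comm in H2.
  unfold Rabs; destruct Rcase_abs; nra.
Qed.

Lemma Cconj_neq0 (z : C) : z <> 0%C -> Cconj z <> 0%C.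
Proof.
  intros H E. apply H. rewrite <- (Cconj_conj z), E.
  apply injective_projections; simpl; ring.
Qed.

Lemma Cconj_RtoC (x : R) : Cconj (RtoC x) = RtoC x.
Proof. apply injective_projections; simpl; ring. Qed.

Lemma Cpow_0_l (n : nat) : (1 <= n)%nat -> (0 ^ n)%C = 0%C.
Proof. intros Hn. destruct n; [lia|]. rewrite Cpow_S. ring. Qed.

Lemma Cmod_lt_ball (x y : C) (eps : R) : Cmod (y - x) < eps -> ball x eps y.
Proof. apply C_NormedModule_mixin_compat1. Qed.

Lemma ball_Cmod_lt (x y : C) (eps : posreal) : ball x eps y -> Cmod (y - x) < 2 * eps.
Proof.
  intros H. assert (H' := C_NormedModule_mixin_compat2 x y eps H).
  change (minus y x) with (y - x)%C in H'.
  assert (sqrt 2 < 2).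
  { rewrite <- (sqrt_square 2) at 2 by lra. apply sqrt_lt_1_alt. lra. }
  destruct eps; simpl in *. nra.
Qed.

Lemma filterlim_C_Cmod (u : nat -> C) (L : C) :
  filterlim u eventually (locally L) <->
  (forall e, 0 < e -> exists N, forall k, (N <= k)%nat -> Cmod (u k - L) < e).
Proof.
  split.
  - intros H e He. assert (He' : 0 < e / 2) by lra.
    apply filterlim_locally with (eps := mkposreal _ He') in H.
    destruct H as [N HN]. exists N. intros k Hk.
    specialize (HN k Hk). apply ball_Cmod_lt in HN. simpl in HN. lra.
  - intros H. apply filterlim_locally. intros eps.
    destruct (H eps (cond_pos eps)) as [N HN]. exists N. intros k Hk.
    apply Cmod_lt_ball. auto.
Qed.

Lemma filterlim_Cmod_le (u : nat -> C) (L : C) (B : R) :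
  filterlim u eventually (locally L) -> (forall k, Cmod (u k) <= B) -> Cmod L <= B.
Proof.
  intros Hl Hb. destruct (Rle_or_lt (Cmod L) B) as [|Hlt]; auto. exfalso.
  destruct (proj1 (filterlim_C_Cmod u L) Hl (Cmod L - B)) as [N HN]; [lra|].
  specialize (HN N (le_n _)). specialize (Hb N).
  assert (H := Cmod_reverse_triangle L (u N - L)).
  replace (L + (u N - L))%C with (u N) in H by ring. lra.
Qed.

Lemma pow_le_1 (x : R) (k : nat) : 0 <= x <= 1 -> x ^ k <= 1.
Proof. intros H. rewrite <- (pow1 k). apply pow_incr. lra. Qed.

Lemma pow_le_self (t : R) (n : nat) : (1 <= n)%nat -> 0 <= t <= 1 -> t ^ n <= t.
Proof.
  intros Hn Ht. destruct n as [|k]; [lia|]. simpl.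
  assert (t ^ k <= 1) by (apply pow_le_1; lra). assert (0 <= t ^ k) by (apply pow_le; lra).
  nra.
Qed.

Lemma pow_ge_self (t : R) (n : nat) : (1 <= n)%nat -> 1 <= t -> t <= t ^ n.
Proof.
  intros Hn Ht. destruct n as [|k]; [lia|]. simpl.
  assert (1 <= t ^ k) by (apply pow_R1_Rle; lra). nra.
Qed.

Lemma pow_lt_compat (a b : R) (n : nat) : (1 <= n)%nat -> 0 <= a < b -> a ^ n < b ^ n.
Proof.
  intros Hn Hab. destruct n as [|k]; [lia|]. simpl.
  assert (a ^ k <= b ^ k) by (apply pow_incr; lra).
  assert (0 < b ^ k) by (apply pow_lt; lra). assert (0 <= a ^ k) by (apply pow_le; lra).
  nra.
Qed.

Lemma pow_lt_reg (a b : R) (n : nat) : 0 <= a -> 0 <= b -> a ^ n < b ^ n -> a < b.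
Proof.
  intros Ha Hb H. destruct (Rlt_or_le a b) as [|Hba]; auto.
  assert (b ^ n <= a ^ n) by (apply pow_incr; lra). lra.
Qed.

Lemma pow_inj (a b : R) (n : nat) :
  (1 <= n)%nat -> 0 <= a -> 0 <= b -> a ^ n = b ^ n -> a = b.
Proof.
  intros Hn Ha Hb H. destruct (Rtotal_order a b) as [Hl|[He|Hl]]; auto.
  - assert (a ^ n < b ^ n) by (apply pow_lt_compat; auto; lra). lra.
  - assert (b ^ n < a ^ n) by (apply pow_lt_compat; auto; lra). lra.
Qed.

Lemma pow_half_vanishes (y : R) : 0 < y -> exists N, forall k, (N <= k)%nat -> (/2) ^ k < y.
Proof.
  intros Hy. destruct (pow_lt_1_zero (/2)) with y as [N HN]; auto.
  - rewrite Rabs_pos_eq; lra.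
  - exists N. intros k Hk. specialize (HN k Hk).
    rewrite Rabs_pos_eq in HN; auto. apply pow_le; lra.
Qed.

(** * Wirtinger derivatives from a quadratic remainder bound *)

Lemma Derive_quadratic_remainder (g : R -> R) (l K d : R) :
  0 < d -> 0 <= K ->
  (forall t, Rabs t < d -> Rabs (g t - g 0 - t * l) <= K * t ^ 2) ->
  Derive g 0 = l.
Proof.
  intros Hd HK H. apply is_derive_unique, is_derive_Reals.
  intros eps Heps.
  assert (Hp : 0 < Rmin d (eps / (K + 1))).
  { apply Rmin_pos; auto. apply Rdiv_lt_0_compat; lra. }
  exists (mkposreal _ Hp). intros h Hh0 Hh. simpl in Hh. rewrite Rplus_0_l.
  assert (Hh1 : Rabs h < d) by (eapply Rlt_le_trans; [apply Hh|apply Rmin_l]).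
  assert (Hh2 : Rabs h < eps / (K + 1)) by (eapply Rlt_le_trans; [apply Hh|apply Rmin_r]).
  specialize (H h Hh1).
  replace ((g h - g 0) / h - l) with ((g h - g 0 - h * l) / h) by (field; auto).
  unfold Rdiv. rewrite Rabs_mult, Rabs_inv.
  assert (Ha : 0 < Rabs h) by (apply Rabs_pos_lt; auto).
  apply Rle_lt_trans with (K * Rabs h).
  { apply Rmult_le_reg_r with (Rabs h); auto.
    rewrite Rmult_assoc, Rinv_l by lra. rewrite <- (pow2_abs h) in H. nra. }
  apply Rle_lt_trans with ((K + 1) * Rabs h); [nra|].
  apply Rmult_lt_reg_r with (/ (K + 1)); [apply Rinv_0_lt_compat; lra|].
  rewrite (Rmult_comm (K + 1)), Rmult_assoc, Rinv_r by lra. lra.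
Qed.

Section RealDifferentiability.
Variables (F : C -> C) (x a b : C) (K d : R).
Hypothesis Hd : 0 < d.
Hypothesis HK : 0 <= K.
Hypothesis Hquad : forall y, Cmod (y - x) < d ->
  Cmod (F y - F x - a * (y - x) - b * Cconj (y - x)) <= K * Cmod (y - x) ^ 2.

Lemma Derive_along_line (e : C) (p : R -> C) :
  Cmod e = 1 -> (forall t, p t = x + RtoC t * e)%C ->
  (Derive (fun t => fst (F (p t))) 0, Derive (fun t => snd (F (p t))) 0)
  = (a * e + b * Cconj e)%C.
Proof.
  intros He Hp.
  assert (Hp0 : p 0 = x) by (rewrite Hp; ring).
  assert (Hbound : forall t, Rabs t < d ->
    Cmod (F (p t) - F x - RtoC t * (a * e + b * Cconj e)) <= K * t ^ 2).
  { intros t Ht.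
    assert (Hpx : (p t - x)%C = (RtoC t * e)%C) by (rewrite Hp; ring).
    assert (Hm : Cmod (p t - x) = Rabs t) by (rewrite Hpx, Cmod_mult, He, Cmod_R; ring).
    assert (Hq := Hquad (p t)). rewrite Hm, pow2_abs in Hq.
    replace (F (p t) - F x - RtoC t * (a * e + b * Cconj e))%C
      with (F (p t) - F x - a * (p t - x) - b * Cconj (p t - x))%C; auto.
    rewrite Hpx, Cmult_conj, Cconj_RtoC. ring. }
  apply injective_projections; apply Derive_quadratic_remainder with K d; auto;
    intros t Ht; rewrite Hp0; eapply Rle_trans; try apply (Hbound t Ht).
  - eapply Rle_trans; [|apply re_le_Cmod]. right. unfold Re. f_equal. simpl. ring.
  - eapply Rle_trans; [|apply im_le_Cmod]. right. unfold Im. f_equal. simpl. ring.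
Qed.

Lemma Wirtinger_of_quadratic_remainder : dz F x = a /\ dzbar F x = b.
Proof.
  assert (Hdx : dx F x = (a + b)%C).
  { unfold dx. rewrite (Derive_along_line 1 (fun t => Cplus x (t, 0))).
    - apply injective_projections; simpl; ring.
    - apply Cmod_1.
    - intros t. apply injective_projections; simpl; ring. }
  assert (Hdy : dy F x = ((a - b) * Ci)%C).
  { unfold dy. rewrite (Derive_along_line Ci (fun t => Cplus x (0, t))).
    - apply injective_projections; simpl; ring.
    - unfold Cmod, Ci. simpl. replace (0 * (0 * 1) + 1 * (1 * 1)) with 1 by ring. apply sqrt_1.
    - intros t. apply injective_projections; simpl; ring. }
  unfold dz, dzbar. rewrite Hdx, Hdy.
  split; apply injective_projections; simpl; field.
Qed.

End RealDifferentiability.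

(** * A Newton-Kantorovich theorem for the harmonic Newton map *)

Lemma HN_step_identity (x a b Fx : C) (D : R) :
  D = Cmod a ^ 2 - Cmod b ^ 2 -> D <> 0 ->
  let d := (x - (Cconj a * Fx - b * Cconj Fx) / RtoC D - x)%C in
  (a * d + b * Cconj d)%C = (- Fx)%C.
Proof.
  intros HD HD0 d. unfold d. rewrite !Cmod2_alt in HD. subst D.
  destruct x as [x1 x2], a as [a1 a2], b as [b1 b2], Fx as [f1 f2].
  unfold Cminus, Cdiv, Cmult, Cplus, Copp, Cinv, Cconj, RtoC, Re, Im in *; simpl in *.
  f_equal; field; intro H; apply HD0; nra.
Qed.

Section HarmonicNewtonKantorovich.
Variables (F al be : C -> C) (x0 : C) (rho M K : R).
Hypothesis Hrho : 0 < rho.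
Hypothesis HM : 0 < M.
Hypothesis HK : 0 <= K.
Hypothesis Hremainder : forall x y, Cmod (x - x0) < rho -> Cmod (y - x0) < rho ->
  Cmod (F y - F x - al x * (y - x) - be x * Cconj (y - x)) <= K * Cmod (y - x) ^ 2.
Hypothesis Hnondeg : forall x, Cmod (x - x0) < rho -> / M <= Rabs (Cmod (al x) - Cmod (be x)).
Hypothesis Hsmall : 2 * (M * Cmod (F x0)) < rho.
Hypothesis Hcontract : 2 * rho * M * K < 1.

Lemma Wirtinger_in_ball x : Cmod (x - x0) < rho ->
  dz F x = al x /\ dzbar F x = be x /\ jac F x = Cmod (al x) ^ 2 - Cmod (be x) ^ 2.
Proof.
  intros Hx.
  destruct (Wirtinger_of_quadratic_remainder F x (al x) (be x) K (rho - Cmod (x - x0)))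
    as [Hdz Hdzbar]; auto.
  - lra.
  - intros y Hy. apply Hremainder; auto.
    eapply Rle_lt_trans; [apply (Cmod_sub_triangle y x x0)|]. lra.
  - unfold jac. rewrite Hdz, Hdzbar. auto.
Qed.

Lemma jac_neq0_in_ball x : Cmod (x - x0) < rho -> jac F x <> 0.
Proof.
  intros Hx. destruct (Wirtinger_in_ball x Hx) as (_ & _ & ->).
  assert (HI := Hnondeg x Hx). assert (0 < / M) by (apply Rinv_0_lt_compat; auto).
  assert (Ha := Cmod_ge_0 (al x)). assert (Hb := Cmod_ge_0 (be x)).
  intro Hc. unfold Rabs in HI. destruct Rcase_abs in HI; nra.
Qed.

Lemma HN_step_equation x : Cmod (x - x0) < rho ->
  (al x * (HN F x - x) + be x * Cconj (HN F x - x))%C = (- F x)%C.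
Proof.
  intros Hx. destruct (Wirtinger_in_ball x Hx) as (Hdz & Hdzbar & Hjac).
  unfold HN. rewrite Hdz, Hdzbar. apply HN_step_identity; auto.
  apply jac_neq0_in_ball; auto.
Qed.

Lemma HN_step_bound x : Cmod (x - x0) < rho -> Cmod (HN F x - x) <= M * Cmod (F x).
Proof.
  intros Hx. assert (Hl := Cmod_add_conj_lower (al x) (be x) (HN F x - x)).
  rewrite HN_step_equation, Cmod_opp in Hl by auto.
  assert (HI := Hnondeg x Hx). assert (0 <= Cmod (HN F x - x)) by apply Cmod_ge_0.
  apply Rmult_le_reg_l with (/ M); [apply Rinv_0_lt_compat; auto|].
  rewrite <- Rmult_assoc, Rinv_l by lra. nra.
Qed.

(* The Newton step kills the linear part, so only the quadratic remainder is left. *)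
Lemma HN_residual_quadratic x : Cmod (x - x0) < rho -> Cmod (HN F x - x0) < rho ->
  Cmod (F (HN F x)) <= K * Cmod (HN F x - x) ^ 2.
Proof.
  intros Hx Hy. assert (HR := Hremainder x (HN F x) Hx Hy).
  replace (F (HN F x) - F x - al x * (HN F x - x) - be x * Cconj (HN F x - x))%C
    with (F (HN F x) - F x - (al x * (HN F x - x) + be x * Cconj (HN F x - x)))%C
    in HR by ring.
  rewrite HN_step_equation in HR by auto.
  replace (F (HN F x) - F x - - F x)%C with (F (HN F x)) in HR by ring. auto.
Qed.

Let h0 := M * Cmod (F x0).

Lemma h0_nonneg : 0 <= h0.
Proof. unfold h0. assert (H := Cmod_ge_0 (F x0)). nra. Qed.

Lemma HN_seq_estimates k :
  Cmod (HN_seq F x0 k - x0) <= 2 * h0 * (1 - (/2) ^ k) /\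
  M * Cmod (F (HN_seq F x0 k)) <= h0 * (/2) ^ k /\
  Cmod (HN_seq F x0 (S k) - HN_seq F x0 k) <= h0 * (/2) ^ k.
Proof.
  assert (He := h0_nonneg).
  assert (Hh0 : 2 * h0 < rho) by exact Hsmall.
  assert (HMKe : M * K * h0 <= / 4) by (assert (0 <= M * K) by nra; unfold h0 in *; nra).
  induction k as [|k IH].
  - simpl. replace (x0 - x0)%C with (RtoC 0) by ring. rewrite Cmod_0.
    assert (Hs := HN_step_bound x0). replace (x0 - x0)%C with (RtoC 0) in Hs by ring.
    rewrite Cmod_0 in Hs. specialize (Hs Hrho). unfold h0 in *. repeat split; lra.
  - destruct IH as (IH1 & IH2 & IH3).
    assert (Hq : 0 < (/2) ^ k <= 1) by (split; [apply pow_lt|apply pow_le_1]; lra).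
    set (xk := HN_seq F x0 k) in *.
    change (HN_seq F x0 (S k)) with (HN F xk) in IH3 |- *.
    change (HN_seq F x0 (S (S k))) with (HN F (HN F xk)).
    assert (Hxk : Cmod (xk - x0) < rho) by nra.
    assert (Hx1 : Cmod (HN F xk - x0) <= 2 * h0 * (1 - (/2) ^ S k)).
    { eapply Rle_trans; [apply (Cmod_sub_triangle _ xk)|]. simpl. lra. }
    assert (Hx1' : Cmod (HN F xk - x0) < rho) by (assert (0 < (/2) ^ S k) by (apply pow_lt; lra); nra).
    assert (HF2 : M * Cmod (F (HN F xk)) <= h0 * (/2) ^ S k).
    { assert (Hd0 : 0 <= Cmod (HN F xk - xk)) by apply Cmod_ge_0.
      assert (Hsq : Cmod (HN F xk - xk) ^ 2 <= (h0 * (/2) ^ k) ^ 2) by (apply pow_incr; lra).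
      assert (HF := HN_residual_quadratic xk Hxk Hx1').
      apply Rle_trans with (M * (K * (h0 * (/2) ^ k) ^ 2)).
      { apply Rmult_le_compat_l; [lra|]. eapply Rle_trans; [apply HF|].
        apply Rmult_le_compat_l; auto. }
      replace (M * (K * (h0 * (/ 2) ^ k) ^ 2))
        with ((M * K * h0) * (h0 * (/2) ^ k * (/2) ^ k)) by ring.
      assert (0 <= h0 * (/2) ^ k * (/2) ^ k) by (apply Rmult_le_pos; [apply Rmult_le_pos|]; lra).
      simpl. nra. }
    assert (Hd' := HN_step_bound (HN F xk) Hx1'). repeat split; lra.
Qed.

Lemma HN_seq_in_ball k : Cmod (HN_seq F x0 k - x0) < rho.
Proof.
  destruct (HN_seq_estimates k) as [H _].
  assert (Hq : 0 < (/2) ^ k) by (apply pow_lt; lra).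
  assert (He := h0_nonneg). assert (2 * h0 < rho) by exact Hsmall. nra.
Qed.

Lemma HN_seq_converges :
  exists L, filterlim (HN_seq F x0) eventually (locally L) /\ Cmod (L - x0) <= 2 * h0.
Proof.
  assert (He := h0_nonneg).
  set (d := fun j => (HN_seq F x0 (S j) - HN_seq F x0 j)%C).
  assert (Hex : ex_series (K := C_AbsRing) (V := C_CompleteNormedModule) d).
  { apply ex_series_le with (b := fun j => h0 * (/2) ^ j).
    - intros j. apply (HN_seq_estimates j).
    - exists (h0 * / (1 - /2)).
      apply (is_series_scal_l (K := R_AbsRing) (V := R_NormedModule) h0 (fun j => (/2) ^ j)).
      apply is_series_geom. rewrite Rabs_pos_eq; lra. }
  destruct Hex as [sum HS].
  assert (Htelescope : forall N, sum_n d N = (HN_seq F x0 (S N) - x0)%C).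
  { induction N as [|N IH].
    - rewrite sum_O. unfold d. simpl. ring.
    - rewrite sum_Sn, IH. unfold d, plus. simpl. ring. }
  assert (Hlim : filterlim (HN_seq F x0) eventually (locally (x0 + sum)%C)).
  { apply filterlim_C_Cmod. intros e He'.
    destruct (proj1 (filterlim_C_Cmod (sum_n d) sum) HS e He') as [N HN].
    exists (S N). intros [|k] Hk; [lia|].
    specialize (HN k ltac:(lia)). rewrite Htelescope in HN.
    replace (HN_seq F x0 (S k) - (x0 + sum))%C with (HN_seq F x0 (S k) - x0 - sum)%C by ring.
    auto. }
  exists (x0 + sum)%C. split; auto.
  apply (filterlim_Cmod_le (fun k => HN_seq F x0 k - x0)%C).
  - apply filterlim_C_Cmod. intros e He'.
    destruct (proj1 (filterlim_C_Cmod _ _) Hlim e He') as [N HN].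
    exists N. intros k Hk.
    replace (HN_seq F x0 k - x0 - (x0 + sum - x0))%C with (HN_seq F x0 k - (x0 + sum))%C by ring.
    auto.
  - intros k. destruct (HN_seq_estimates k) as [H _].
    assert (0 < (/2) ^ k) by (apply pow_lt; lra). nra.
Qed.

Lemma Cmod_F_le_near L y : Cmod (L - x0) < rho -> Cmod (y - x0) < rho ->
  Cmod (F L) <= Cmod (F y) + (Cmod (al L) + Cmod (be L)) * Cmod (y - L) + K * Cmod (y - L) ^ 2.
Proof.
  intros HL Hy. assert (HR := Hremainder L y HL Hy).
  set (h := (y - L)%C) in *.
  set (r := (F y - F L - al L * h - be L * Cconj h)%C) in *.
  replace (F L) with (F y + - r + - (al L * h) + - (be L * Cconj h))%C by (unfold r; ring).
  eapply Rle_trans; [apply Cmod_triangle|].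
  eapply Rle_trans; [apply Rplus_le_compat_r, Cmod_triangle|].
  eapply Rle_trans; [apply Rplus_le_compat_r, Rplus_le_compat_r, Cmod_triangle|].
  rewrite !Cmod_opp, !Cmod_mult, Cmod_conj. lra.
Qed.

Lemma HN_limit_is_root L :
  filterlim (HN_seq F x0) eventually (locally L) -> Cmod (L - x0) < rho -> F L = 0%C.
Proof.
  intros Hlim HL. apply Cmod_eq_0.
  destruct (Req_dec (Cmod (F L)) 0) as [|H0]; auto. exfalso.
  assert (Hp : 0 < Cmod (F L)) by (assert (H := Cmod_ge_0 (F L)); lra).
  assert (He := h0_nonneg).
  set (A := Cmod (al L) + Cmod (be L)).
  assert (HA : 0 <= A) by (unfold A; assert (H1 := Cmod_ge_0 (al L)); assert (H2 := Cmod_ge_0 (be L)); lra).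
  set (e := Rmin 1 (Cmod (F L) / (4 * (A + K + 1)))).
  assert (He1 : e <= 1) by apply Rmin_l.
  assert (He2 : e <= Cmod (F L) / (4 * (A + K + 1))) by apply Rmin_r.
  assert (Hep : 0 < e) by (apply Rmin_pos; [lra|apply Rdiv_lt_0_compat; lra]).
  destruct (proj1 (filterlim_C_Cmod _ _) Hlim e Hep) as [N1 HN1].
  destruct (pow_half_vanishes (Cmod (F L) * M / (4 * (h0 + 1)))) as [N2 HN2].
  { apply Rdiv_lt_0_compat; nra. }
  set (k := max N1 N2).
  specialize (HN1 k ltac:(lia)). specialize (HN2 k ltac:(lia)).
  destruct (HN_seq_estimates k) as (_ & Hfk & _).
  assert (Hdec := Cmod_F_le_near L (HN_seq F x0 k) HL (HN_seq_in_ball k)). fold A in Hdec.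
  set (h := Cmod (HN_seq F x0 k - L)) in *.
  assert (Hh0 : 0 <= h) by apply Cmod_ge_0.
  assert (HFk : Cmod (F (HN_seq F x0 k)) <= Cmod (F L) / 4).
  { assert (Hq : 0 < (/2) ^ k) by (apply pow_lt; lra).
    apply Rmult_le_reg_l with M; auto.
    apply Rle_trans with (h0 * (/2) ^ k); auto.
    apply Rle_trans with ((h0 + 1) * (Cmod (F L) * M / (4 * (h0 + 1)))); [nra|].
    right. field. lra. }
  assert (Hx : (A + K + 1) * e <= Cmod (F L) / 4).
  { apply Rle_trans with ((A + K + 1) * (Cmod (F L) / (4 * (A + K + 1)))).
    - apply Rmult_le_compat_l; lra.
    - right. field. lra. }
  assert (h ^ 2 <= h) by (simpl; nra).
  assert (K * h ^ 2 + A * h <= (A + K + 1) * e) by nra.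
  lra.
Qed.

(* A second root y would give [|y - L| / M <= K |y - L|^2], i.e. [|y - L| >= 1 / (M K)],
   which the contraction hypothesis forbids inside the ball. *)
Lemma root_unique_in_ball L y : Cmod (L - x0) < rho -> Cmod (y - x0) < rho ->
  F L = 0%C -> F y = 0%C -> y = L.
Proof.
  intros HL Hy FL Fy.
  destruct (Req_dec (Cmod (y - L)) 0) as [H0|H0].
  { apply Cmod_eq_0 in H0. replace y with (y - L + L)%C by ring. rewrite H0. ring. }
  exfalso. assert (HR := Hremainder L y HL Hy). rewrite Fy, FL in HR.
  replace (0 - 0 - al L * (y - L) - be L * Cconj (y - L))%C
    with (- (al L * (y - L) + be L * Cconj (y - L)))%C in HR by ring.
  rewrite Cmod_opp in HR.
  assert (Hl := Cmod_add_conj_lower (al L) (be L) (y - L)).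
  assert (HI := Hnondeg L HL).
  assert (Hp : 0 < Cmod (y - L)) by (assert (H := Cmod_ge_0 (y - L)); lra).
  assert (Hyl : Cmod (y - L) < 2 * rho).
  { eapply Rle_lt_trans; [apply (Cmod_sub_triangle y x0 L)|].
    replace (x0 - L)%C with (- (L - x0))%C by ring. rewrite Cmod_opp. lra. }
  assert (H1 : / M * Cmod (y - L) <= K * Cmod (y - L) ^ 2).
  { eapply Rle_trans; [|apply HR]. eapply Rle_trans; [|apply Hl].
    apply Rmult_le_compat_r; lra. }
  assert (H2 : / M <= K * Cmod (y - L)) by (apply Rmult_le_reg_r with (Cmod (y - L)); auto; simpl in H1; nra).
  assert (H3 : 1 <= M * K * Cmod (y - L)).
  { apply Rmult_le_compat_l with (r := M) in H2; [|lra]. rewrite Rinv_r in H2 by lra. nra. }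
  assert (0 <= M * K) by nra. nra.
Qed.

Theorem harmonic_Newton_Kantorovich :
  exists L, HN_converges_to F x0 L /\ F L = 0%C /\ Cmod (L - x0) <= 2 * (M * Cmod (F x0)) /\
    (forall y, Cmod (y - x0) < rho -> F y = 0%C -> y = L).
Proof.
  destruct HN_seq_converges as (L & Hlim & HL).
  assert (HLb : Cmod (L - x0) < rho) by (assert (2 * h0 < rho) by exact Hsmall; lra).
  assert (FL := HN_limit_is_root L Hlim HLb).
  exists L. repeat split; auto.
  - intros k. apply jac_neq0_in_ball, HN_seq_in_ball.
  - intros y Hy Fy. apply root_unique_in_ball; auto.
Qed.

End HarmonicNewtonKantorovich.

(** * Taylor bounds for powers and inverse powers *)

Lemma Cpow_S_taylor (x y : C) (B : R) (k : nat) :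
  0 <= B -> Cmod x <= B -> Cmod y <= B ->
  Cmod (y ^ S k - x ^ S k - RtoC (INR (S k)) * x ^ k * (y - x))
    <= INR (S k) * INR k / 2 * B ^ (pred k) * Cmod (y - x) ^ 2.
Proof.
  intros HR Hx Hy. induction k as [|k IH].
  - simpl. replace (y * 1 - x * 1 - RtoC 1 * 1 * (y - x))%C with (RtoC 0).
    + rewrite Cmod_0. lra.
    + apply injective_projections; simpl; ring.
  - replace (y ^ S (S k) - x ^ S (S k) - RtoC (INR (S (S k))) * x ^ S k * (y - x))%C
      with (y * (y ^ S k - x ^ S k - RtoC (INR (S k)) * x ^ k * (y - x))
            + RtoC (INR (S k)) * x ^ k * ((y - x) * (y - x)))%C.
    2:{ rewrite (S_INR (S k)), RtoC_plus. rewrite !Cpow_S. ring. }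
    eapply Rle_trans; [apply Cmod_triangle|]. rewrite !Cmod_mult, Cmod_pow, Cmod_R.
    rewrite Rabs_pos_eq by (apply pos_INR).
    assert (H0 := Cmod_ge_0 (y - x)).
    assert (H1 := Cmod_ge_0 (y ^ S k - x ^ S k - RtoC (INR (S k)) * x ^ k * (y - x))).
    assert (H2 : Cmod x ^ k <= B ^ k) by (apply pow_incr; split; [apply Cmod_ge_0|auto]).
    assert (H3 := pos_INR k).
    assert (H4 : 0 <= B ^ pred k) by (apply pow_le; auto).
    assert (HA : Cmod y * Cmod (y ^ S k - x ^ S k - RtoC (INR (S k)) * x ^ k * (y - x))
                 <= B * (INR (S k) * INR k / 2 * B ^ pred k * Cmod (y - x) ^ 2)).
    { apply Rmult_le_compat; auto. apply Cmod_ge_0. }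
    assert (HB : INR (S k) * Cmod x ^ k * (Cmod (y - x) * Cmod (y - x))
                 <= INR (S k) * B ^ k * Cmod (y - x) ^ 2).
    { simpl (_ ^ 2). rewrite Rmult_1_r. apply Rmult_le_compat_r; [nra|].
      apply Rmult_le_compat_l; [apply pos_INR|auto]. }
    eapply Rle_trans; [apply Rplus_le_compat; [apply HA|apply HB]|].
    destruct k as [|k].
    + simpl. lra.
    + simpl pred. rewrite !S_INR. simpl (B ^ S k). right. simpl. field.
Qed.

Lemma Cpow_taylor (x y : C) (B : R) (m : nat) :
  0 < B -> Cmod x <= B -> Cmod y <= B ->
  B ^ 2 * Cmod (y ^ m - x ^ m - RtoC (INR m) * x ^ (pred m) * (y - x))
    <= INR m ^ 2 * B ^ m * Cmod (y - x) ^ 2.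
Proof.
  intros HR Hx Hy. destruct m as [|k].
  - simpl. replace (1 - 1 - RtoC 0 * 1 * (y - x))%C with (RtoC 0).
    + rewrite Cmod_0. nra.
    + apply injective_projections; simpl; ring.
  - simpl pred. assert (H := Cpow_S_taylor x y B k ltac:(lra) Hx Hy).
    assert (H0 := Cmod_ge_0 (y - x)). assert (H3 := pos_INR k).
    apply Rle_trans with (B ^ 2 * (INR (S k) * INR k / 2 * B ^ pred k * Cmod (y - x) ^ 2)).
    { apply Rmult_le_compat_l; auto. nra. }
    assert (H5 : 0 <= Cmod (y - x) ^ 2) by nra.
    destruct k as [|k].
    + simpl. nra.
    + simpl pred. rewrite !S_INR in *.
      replace (B ^ S (S k)) with (B ^ 2 * B ^ k) by (simpl; ring).
      assert (0 <= B ^ k) by (apply pow_le; lra).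
      assert (0 <= B^2) by nra.
      set (P := B ^ 2 * B ^ k * Cmod (y - x) ^ 2).
      assert (HP : 0 <= P) by (unfold P; apply Rmult_le_pos; [apply Rmult_le_pos|]; auto).
      replace (B ^ 2 * ((INR k + 1 + 1) * (INR k + 1) / 2 * B ^ k * Cmod (y - x) ^ 2))
        with (((INR k + 1 + 1) * (INR k + 1) / 2) * P) by (unfold P; ring).
      replace ((INR k + 1 + 1) ^ 2 * (B ^ 2 * B ^ k) * Cmod (y - x) ^ 2)
        with ((INR k + 1 + 1) ^ 2 * P) by (unfold P; ring).
      nra.
Qed.

Lemma Cinv_Cmod_le (x : C) (r0 : R) :
  0 < r0 -> r0 <= Cmod x -> x <> 0%C /\ Cmod (/ x) <= / r0.
Proof.
  intros H0 H1. assert (Hx : x <> 0%C) by (intro E; subst; rewrite Cmod_0 in H1; lra).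
  split; auto. rewrite Cmod_inv by auto. apply Rinv_le_contravar; auto.
Qed.

Lemma Cinv_pow_remainder_identity (k : nat) (x y : C) : x <> 0%C -> y <> 0%C ->
  (/ y ^ S k - / x ^ S k + RtoC (INR (S k)) * / x ^ S (S k) * (y - x))%C
  = (((/ y) ^ S k - (/ x) ^ S k - RtoC (INR (S k)) * (/ x) ^ k * (/ y - / x))
     + RtoC (INR (S k)) * (/ x) ^ S k * (y - x) * (/ x - / y))%C.
Proof.
  intros Hx0 Hy0. rewrite !Cpow_inv by auto. rewrite !Cpow_S.
  field. repeat split; auto; apply Cpow_nz; auto.
Qed.

(* Apply [Cpow_taylor] at [1/x, 1/y], using [1/y - 1/x = -(y - x) / (x y)]. *)
Lemma Cinv_pow_S_taylor (k : nat) (x y : C) (r0 : R) :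
  0 < r0 -> r0 <= Cmod x -> r0 <= Cmod y ->
  Cmod (/ y ^ S k - / x ^ S k + RtoC (INR (S k)) * / x ^ S (S k) * (y - x))
    <= (INR (S k) ^ 2 + INR (S k)) * (/ r0) ^ (S k + 2) * Cmod (y - x) ^ 2.
Proof.
  intros H0 Hx Hy.
  destruct (Cinv_Cmod_le x r0 H0 Hx) as [Hx0 Hv].
  destruct (Cinv_Cmod_le y r0 H0 Hy) as [Hy0 Hu].
  assert (HR : 0 < / r0) by (apply Rinv_0_lt_compat; auto).
  assert (Hh := Cmod_ge_0 (y - x)).
  rewrite Cinv_pow_remainder_identity by auto.
  set (u := (/ y)%C) in *. set (v := (/ x)%C) in *.
  assert (Hd : Cmod (u - v) <= Cmod (y - x) * (/ r0) ^ 2).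
  { replace (u - v)%C with (- ((y - x) * u * v))%C by (unfold u, v; field; auto).
    rewrite Cmod_opp, !Cmod_mult. simpl. rewrite Rmult_1_r, Rmult_assoc.
    apply Rmult_le_compat_l; auto. apply Rmult_le_compat; auto; apply Cmod_ge_0. }
  assert (Hd0 := Cmod_ge_0 (u - v)).
  assert (Hk := pos_INR (S k)).
  assert (Hvk : Cmod v ^ S k <= (/ r0) ^ S k) by (apply pow_incr; split; auto; apply Cmod_ge_0).
  assert (HRk : 0 < (/ r0) ^ S k) by (apply pow_lt; auto).
  replace ((/ r0) ^ (S k + 2)) with ((/ r0) ^ S k * (/ r0) ^ 2) by (rewrite pow_add; ring).
  assert (HE : Cmod (u ^ S k - v ^ S k - RtoC (INR (S k)) * v ^ k * (u - v))
               <= INR (S k) ^ 2 * ((/ r0) ^ S k * (/ r0) ^ 2) * Cmod (y - x) ^ 2).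
  { apply Rmult_le_reg_l with ((/ r0) ^ 2); [apply pow_lt; auto|].
    eapply Rle_trans; [apply (Cpow_taylor v u (/ r0) (S k) HR Hv Hu)|].
    assert (Hd2 : Cmod (u - v) ^ 2 <= (Cmod (y - x) * (/ r0) ^ 2) ^ 2) by (apply pow_incr; lra).
    apply Rle_trans with (INR (S k) ^ 2 * (/ r0) ^ S k * (Cmod (y - x) * (/ r0) ^ 2) ^ 2).
    - apply Rmult_le_compat_l; auto. apply Rmult_le_pos; [nra|lra].
    - right. ring. }
  assert (HF : INR (S k) * Cmod v ^ S k * Cmod (y - x) * Cmod (v - u)
               <= INR (S k) * ((/ r0) ^ S k * (/ r0) ^ 2) * Cmod (y - x) ^ 2).
  { replace (v - u)%C with (- (u - v))%C by ring. rewrite Cmod_opp.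
    assert (0 <= Cmod v ^ S k) by (apply pow_le; apply Cmod_ge_0).
    apply Rle_trans with (INR (S k) * (/ r0) ^ S k * Cmod (y - x) * (Cmod (y - x) * (/ r0) ^ 2)).
    - apply Rmult_le_compat; auto.
      + apply Rmult_le_pos; auto. apply Rmult_le_pos; auto.
      + apply Rmult_le_compat_r; auto. apply Rmult_le_compat_l; auto.
    - right. ring. }
  eapply Rle_trans; [apply Cmod_triangle|].
  rewrite !Cmod_mult, Cmod_R, Cmod_pow, Rabs_pos_eq by apply pos_INR.
  lra.
Qed.

Lemma Cinv_pow_taylor (n : nat) (x y : C) (r0 : R) :
  0 < r0 -> r0 <= Cmod x -> r0 <= Cmod y ->
  Cmod (/ y ^ n - / x ^ n + RtoC (INR n) * / x ^ (S n) * (y - x))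
    <= (INR n ^ 2 + INR n) * (/ r0) ^ (n + 2) * Cmod (y - x) ^ 2.
Proof.
  intros H0 Hx Hy. destruct n as [|k]; [|apply Cinv_pow_S_taylor; auto].
  destruct (Cinv_Cmod_le x r0 H0 Hx) as [Hx0 _].
  replace (/ y ^ 0 - / x ^ 0 + RtoC (INR 0) * / x ^ 1 * (y - x))%C with (RtoC 0)
    by (simpl; field; auto).
  rewrite Cmod_0. simpl. lra.
Qed.

(** * Roots of unity *)

Lemma Cmod_root_of_unity (u : C) (n : nat) : (1 <= n)%nat -> (u ^ n)%C = 1%C -> Cmod u = 1.
Proof.
  intros Hn Hu. assert (H := Cmod_pow u n). rewrite Hu, Cmod_1 in H.
  assert (H0 := Cmod_ge_0 u).
  destruct (Rlt_or_le (Cmod u) 1) as [H1|H1].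
  - assert (Cmod u ^ n <= Cmod u) by (apply pow_le_self; auto; lra). lra.
  - destruct (Rle_lt_or_eq_dec 1 (Cmod u) H1) as [H2|H2]; auto.
    assert (Cmod u <= Cmod u ^ n) by (apply pow_ge_self; auto; lra). lra.
Qed.

(* Taylor's bound at [x = 1] with radius 1 reads [n |u - 1| <= n^2 |u - 1|^2]. *)
Lemma root_of_unity_separation (u : C) (n : nat) :
  (1 <= n)%nat -> (u ^ n)%C = 1%C -> u <> 1%C -> 1 <= INR n * Cmod (u - 1).
Proof.
  intros Hn Hu Hne. assert (Hm := Cmod_root_of_unity u n Hn Hu).
  assert (H1 : Cmod (RtoC 1) <= 1) by (rewrite Cmod_1; lra).
  assert (Hp := Cpow_taylor 1%C u 1 n ltac:(lra) H1 ltac:(lra)).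
  assert (E : (u ^ n - 1 ^ n - RtoC (INR n) * 1 ^ pred n * (u - 1))%C = (- (RtoC (INR n) * (u - 1)))%C)
    by (rewrite Hu, !Cpow_1_l; ring).
  rewrite E in Hp.
  rewrite Cmod_opp, Cmod_mult, Cmod_R, Rabs_pos_eq in Hp by apply pos_INR.
  rewrite !pow1 in Hp.
  assert (Hp0 : 0 < Cmod (u - 1)).
  { apply Cmod_gt_0. intro E0. apply Hne. replace u with (u - 1 + 1)%C by ring. rewrite E0. ring. }
  assert (Hn0 : 0 < INR n) by (apply lt_0_INR; lia).
  assert (H3 : INR n * Cmod (u - 1) <= INR n ^ 2 * Cmod (u - 1) ^ 2) by lra.
  assert (H4 : 1 <= INR n * Cmod (u - 1)).
  { apply Rmult_le_reg_l with (INR n * Cmod (u - 1)). nra. nra. }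
  auto.
Qed.

Lemma Cmod_pow_near_1 (s : C) (n : nat) :
  (1 <= n)%nat -> Cmod (s ^ n - 1) <= /2 -> /2 <= Cmod s <= 3/2.
Proof.
  intros Hn Hs.
  assert (Hsn : /2 <= Cmod s ^ n <= 3/2).
  { rewrite <- Cmod_pow. assert (H1 := Cmod_reverse_triangle 1 (s ^ n - 1)).
    assert (H2 := Cmod_triangle 1 (s ^ n - 1)).
    replace (1 + (s ^ n - 1))%C with (s ^ n)%C in H1, H2 by ring.
    rewrite Cmod_1 in H1, H2. lra. }
  assert (H0 := Cmod_ge_0 s). split.
  - destruct (Rlt_or_le (Cmod s) (/2)) as [H|H]; auto.
    assert (Cmod s ^ n <= Cmod s) by (apply pow_le_self; auto; lra). lra.
  - destruct (Rle_or_lt (Cmod s) (3/2)) as [H|H]; auto.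
    assert (Cmod s <= Cmod s ^ n) by (apply pow_ge_self; auto; lra). lra.
Qed.

Lemma Cpow_derivative_lower (x : C) (n : nat) :
  (1 <= n)%nat -> /4 <= Cmod x -> / 4 ^ n <= Cmod (RtoC (INR n) * x ^ pred n).
Proof.
  intros Hn Hx. rewrite Cmod_mult, Cmod_R, Cmod_pow, Rabs_pos_eq by apply pos_INR.
  rewrite <- pow_inv.
  assert (H1 : 1 <= INR n) by (apply (le_INR 1); auto).
  assert (H2 : (/4) ^ n <= (/4) ^ pred n).
  { destruct n as [|k]; [lia|]. simpl. assert (0 < (/4) ^ k) by (apply pow_lt; lra). nra. }
  assert (H3 : (/4) ^ pred n <= Cmod x ^ pred n) by (apply pow_incr; lra).
  assert (0 <= (/4) ^ n) by (apply pow_le; lra). nra.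
Qed.

(* Harmonic Newton-Kantorovich for [z^n - 1] started at [s], on the annulus
   [1/4 <= |z| <= 2] where [M = 4^n] and [K = n^2 2^n / 4]. *)
Lemma root_of_unity_within (n : nat) (rho : R) (s : C) : (1 <= n)%nat -> 0 < rho <= /4 ->
  2 * rho * 4 ^ n * (INR n ^ 2 * 2 ^ n / 4) < 1 ->
  Cmod (s ^ n - 1) <= Rmin (/2) (rho / (4 * 4 ^ n)) ->
  exists w, (w ^ n)%C = 1%C /\ Cmod (s - w) <= rho / 2.
Proof.
  intros Hn Hr Hcontract Hs.
  set (M := 4 ^ n) in *. set (K := INR n ^ 2 * 2 ^ n / 4) in *.
  assert (HM : 0 < M) by (unfold M; apply pow_lt; lra).
  assert (HK : 0 <= K).
  { unfold K. assert (0 < 2 ^ n) by (apply pow_lt; lra).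
    assert (0 <= INR n ^ 2) by (apply pow_le, pos_INR). nra. }
  assert (Hs1 : Cmod (s ^ n - 1) <= /2) by (eapply Rle_trans; [apply Hs|apply Rmin_l]).
  assert (Hs2 : Cmod (s ^ n - 1) <= rho / (4 * M)) by (eapply Rle_trans; [apply Hs|apply Rmin_r]).
  assert (Hsb := Cmod_pow_near_1 s n Hn Hs1).
  assert (Hball : forall x, Cmod (x - s) < rho -> /4 <= Cmod x <= 2).
  { intros x Hx. assert (H1 := Cmod_reverse_triangle s (x - s)).
    assert (H2 := Cmod_triangle s (x - s)).
    replace (s + (x - s))%C with x in H1, H2 by ring. split; lra. }
  destruct (harmonic_Newton_Kantorovich (fun x => x ^ n - 1)%C
              (fun x => RtoC (INR n) * x ^ (pred n))%C (fun _ => 0%C) s rho M K)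
    as (L & _ & HL0 & HL1 & _); auto; try lra.
  - intros x y Hx Hy. destruct (Hball x Hx) as [_ Hx2]. destruct (Hball y Hy) as [_ Hy2].
    assert (Hp := Cpow_taylor x y 2 n ltac:(lra) Hx2 Hy2).
    replace (y ^ n - 1 - (x ^ n - 1) - RtoC (INR n) * x ^ pred n * (y - x) - 0 * Cconj (y - x))%C
      with (y ^ n - x ^ n - RtoC (INR n) * x ^ pred n * (y - x))%C by ring.
    unfold K. replace (2 ^ 2) with 4 in Hp by ring. lra.
  - intros x Hx. rewrite Cmod_0, Rminus_0_r, Rabs_pos_eq by apply Cmod_ge_0.
    unfold M. apply Cpow_derivative_lower; auto. apply Hball; auto.
  - assert (Hq : 2 * (M * (rho / (4 * M))) = rho / 2) by (field; lra). nra.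
  - exists L. split.
    + replace (L ^ n)%C with (L ^ n - 1 + 1)%C by ring. rewrite HL0. ring.
    + replace (s - L)%C with (- (L - s))%C by ring. rewrite Cmod_opp.
      assert (2 * (M * Cmod (s ^ n - 1)) <= rho / 2).
      { apply Rle_trans with (2 * (M * (rho / (4 * M)))); [nra|]. right. field. lra. }
      lra.
Qed.

Lemma near_root_of_unity (n : nat) (lam : R) : (1 <= n)%nat -> 0 < lam ->
  exists eps0, 0 < eps0 /\ forall s, Cmod (s ^ n - 1) <= eps0 ->
    exists w, (w ^ n)%C = 1%C /\ Cmod (s - w) < lam.
Proof.
  intros Hn Hl.
  set (MK := 4 ^ n * (INR n ^ 2 * 2 ^ n / 4)).
  assert (HMK : 0 <= MK).
  { unfold MK. assert (0 < 4 ^ n) by (apply pow_lt; lra). assert (0 < 2 ^ n) by (apply pow_lt; lra).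
    assert (0 <= INR n ^ 2) by (apply pow_le, pos_INR). apply Rmult_le_pos; [lra|]. nra. }
  set (rho := Rmin (Rmin (/4) (lam / 2)) (/ (4 * MK + 1))).
  assert (Hr1 : rho <= /4) by (unfold rho; eapply Rle_trans; [apply Rmin_l|apply Rmin_l]).
  assert (Hr2 : rho <= lam / 2) by (unfold rho; eapply Rle_trans; [apply Rmin_l|apply Rmin_r]).
  assert (Hr3 : rho <= / (4 * MK + 1)) by (unfold rho; apply Rmin_r).
  assert (Hr0 : 0 < rho).
  { unfold rho. repeat apply Rmin_pos; try lra. apply Rinv_0_lt_compat. lra. }
  assert (H4n : 0 < 4 ^ n) by (apply pow_lt; lra).
  exists (Rmin (/2) (rho / (4 * 4 ^ n))). split.
  { apply Rmin_pos; [lra|]. apply Rdiv_lt_0_compat; lra. }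
  intros s Hs. destruct (root_of_unity_within n rho s Hn ltac:(lra)) as [w [Hw Hsw]]; auto.
  - replace (2 * rho * 4 ^ n * (INR n ^ 2 * 2 ^ n / 4)) with (2 * MK * rho) by (unfold MK; ring).
    apply Rle_lt_trans with (2 * MK * / (4 * MK + 1)); [apply Rmult_le_compat_l; lra|].
    apply Rmult_lt_reg_r with (4 * MK + 1); [lra|].
    replace (2 * MK * / (4 * MK + 1) * (4 * MK + 1)) with (2 * MK) by (field; lra). lra.
  - exists w. split; auto. lra.
Qed.

Definition cis (t : R) : C := (cos t, sin t).

Lemma cis_pow (t : R) (k : nat) : (cis t ^ k)%C = cis (INR k * t).
Proof.
  induction k as [|k IH].
  - simpl. unfold cis. rewrite Rmult_0_l, cos_0, sin_0. reflexivity.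
  - rewrite Cpow_S, IH. rewrite S_INR. unfold cis, Cmult; simpl.
    replace ((INR k + 1) * t) with (t + INR k * t) by ring.
    rewrite cos_plus, sin_plus. f_equal; ring.
Qed.

Lemma unit_polar_form (z : C) : Cmod z = 1 -> exists t, 0 <= t < 2 * PI /\ z = cis t.
Proof.
  intros H. assert (H2 := Cmod2_alt z). rewrite H in H2.
  destruct z as [x y]. simpl in H2. unfold Re, Im in H2; simpl in H2.
  assert (Hx : -1 <= x <= 1) by nra.
  assert (Hs : sqrt (1 - x²) = Rabs y).
  { rewrite <- sqrt_Rsqr_abs. f_equal. unfold Rsqr. nra. }
  assert (HPI := PI_RGT_0).
  destruct (Rle_or_lt 0 y) as [Hy|Hy].
  - exists (acos x). assert (Hb := acos_bound x). split. lra.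
    unfold cis. rewrite cos_acos by auto. rewrite sin_acos by auto. rewrite Hs, Rabs_pos_eq; auto.
  - assert (Hx' : -1 < x < 1).
    { split; destruct (Req_dec x (-1)); destruct (Req_dec x 1); subst; try nra. }
    assert (Hb := acos_bound_lt x Hx').
    exists (2 * PI - acos x). split. lra.
    unfold cis. rewrite cos_minus, sin_minus, cos_2PI, sin_2PI.
    rewrite cos_acos by lra. rewrite sin_acos by lra. rewrite Hs, Rabs_left by auto.
    f_equal; ring.
Qed.

Lemma polar_form (z : C) : z <> 0%C -> exists t, z = (RtoC (Cmod z) * cis t)%C.
Proof.
  intros Hz. assert (Hm : 0 < Cmod z) by (apply Cmod_gt_0; auto).
  destruct (unit_polar_form (z / RtoC (Cmod z))%C) as [t [_ Ht]].
  { assert (Hne : RtoC (Cmod z) <> 0%C) by (intro E; injection E; lra).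
    rewrite Cmod_div by auto. rewrite Cmod_R, Rabs_pos_eq by lra. field. lra. }
  exists t. rewrite <- Ht. field. intro E. injection E. lra.
Qed.

Lemma exp_pow (a : R) (k : nat) : exp a ^ k = exp (INR k * a).
Proof.
  induction k as [|k IH]. simpl. rewrite Rmult_0_l, exp_0; auto.
  simpl pow. rewrite IH, S_INR, <- exp_plus. f_equal. ring.
Qed.

Lemma exists_nth_root (W : C) (n : nat) : (1 <= n)%nat -> W <> 0%C -> exists z, (z ^ n)%C = W.
Proof.
  intros Hn HW. destruct (polar_form W HW) as [t Ht].
  assert (Hm : 0 < Cmod W) by (apply Cmod_gt_0; auto).
  assert (HnR : 0 < INR n) by (apply lt_0_INR; lia).
  exists (RtoC (exp (ln (Cmod W) / INR n)) * cis (t / INR n))%C.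
  rewrite Cpow_mult_l, cis_pow, <- RtoC_pow, exp_pow.
  replace (INR n * (ln (Cmod W) / INR n)) with (ln (Cmod W)) by (field; lra).
  replace (INR n * (t / INR n)) with t by (field; lra).
  rewrite exp_ln by auto. auto.
Qed.

Lemma cos_neq_1 (x : R) : 0 < x < 2 * PI -> cos x <> 1.
Proof.
  intros Hx E. replace x with (2 * (x / 2)) in E by field.
  rewrite cos_2a_sin in E. assert (sin (x/2) > 0) by (apply sin_gt_0; lra). nra.
Qed.

Definition unity_root (n j : nat) : C := cis (2 * PI * INR j / INR n).

Lemma unity_root_pow (n j : nat) : (1 <= n)%nat -> (unity_root n j ^ n)%C = 1%C.
Proof.
  intros Hn. unfold unity_root. rewrite cis_pow.
  assert (HnR : 0 < INR n) by (apply lt_0_INR; lia).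
  replace (INR n * (2 * PI * INR j / INR n)) with (0 + 2 * INR j * PI) by (field; lra).
  unfold cis. rewrite cos_period, sin_period, cos_0, sin_0. reflexivity.
Qed.

Lemma unity_root_inj (n j k : nat) :
  (j < n)%nat -> (k < n)%nat -> unity_root n j = unity_root n k -> j = k.
Proof.
  intros Hj Hk E.
  assert (HnR : 0 < INR n) by (apply lt_0_INR; lia).
  assert (HPI := PI_RGT_0).
  assert (Hne : forall p q, (p < q)%nat -> (q < n)%nat -> unity_root n p <> unity_root n q).
  { intros p q Hpq Hqn Epq. unfold unity_root, cis in Epq. injection Epq as E1 E2.
    apply (cos_neq_1 (2 * PI * INR q / INR n - 2 * PI * INR p / INR n)).
    - assert (INR p < INR q) by (apply lt_INR; auto).
      assert (INR q < INR n) by (apply lt_INR; auto).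
      assert (0 <= INR p) by apply pos_INR.
      split; apply Rmult_lt_reg_r with (INR n); auto; field_simplify; nra.
    - rewrite cos_minus, E1, E2, <- (sin2_cos2 (2 * PI * INR q / INR n)). unfold Rsqr. ring. }
  destruct (Nat.lt_trichotomy j k) as [H|[H|H]]; auto; exfalso.
  - exact (Hne j k H Hk E).
  - exact (Hne k j H Hj (eq_sym E)).
Qed.

Lemma unity_root_affine_inj (n j k : nat) (z0 zeta0 : C) : zeta0 <> 0%C ->
  (j < n)%nat -> (k < n)%nat ->
  (z0 + zeta0 * unity_root n j)%C = (z0 + zeta0 * unity_root n k)%C -> j = k.
Proof.
  intros Hz Hj Hk E. apply (unity_root_inj n j k Hj Hk).
  apply (f_equal (fun t => ((t - z0) / zeta0)%C)) in E.
  replace ((z0 + zeta0 * unity_root n j - z0) / zeta0)%C with (unity_root n j) in E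
    by (field; auto).
  replace ((z0 + zeta0 * unity_root n k - z0) / zeta0)%C with (unity_root n k) in E
    by (field; auto).
  exact E.
Qed.

Lemma root_of_unity_enum (n : nat) (u : C) : (1 <= n)%nat -> (u ^ n)%C = 1%C ->
  exists j, (j < n)%nat /\ u = unity_root n j.
Proof.
  intros Hn Hu. assert (Hm := Cmod_root_of_unity u n Hn Hu).
  destruct (unit_polar_form u Hm) as [t [Ht Hut]].
  assert (HnR : 0 < INR n) by (apply lt_0_INR; lia).
  assert (HPI := PI_RGT_0).
  rewrite Hut, cis_pow in Hu. unfold cis in Hu. injection Hu as Hc Hs.
  assert (Hnt : 0 <= INR n * t / (2 * PI)).
  { apply Rmult_le_pos; [nra|]. left. apply Rinv_0_lt_compat. lra. }
  destruct (nfloor_ex _ Hnt) as [j [Hj1 Hj2]].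
  assert (Hjn : (j < n)%nat).
  { apply INR_lt. apply Rle_lt_trans with (INR n * t / (2 * PI)); auto.
    apply Rmult_lt_reg_r with (2 * PI). lra. field_simplify; try lra. nra. }
  set (r := INR n * t - 2 * PI * INR j).
  assert (Hr : 0 <= r < 2 * PI).
  { unfold r. split.
    - apply Rmult_le_compat_r with (r := 2 * PI) in Hj1; [|lra].
      field_simplify in Hj1; lra.
    - apply Rmult_lt_compat_r with (r := 2 * PI) in Hj2; [|lra].
      field_simplify in Hj2; lra. }
  assert (Hcr : cos r = 1).
  { rewrite <- Hc. replace (INR n * t) with (r + 2 * INR j * PI) by (unfold r; ring).
    rewrite cos_period. auto. }
  assert (Hr0 : r = 0).
  { destruct (Req_dec r 0) as [|Hne]; auto. exfalso. apply (cos_neq_1 r); auto. lra. }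
  exists j. split; auto. rewrite Hut. unfold unity_root. f_equal.
  unfold r in Hr0. apply Rmult_eq_reg_l with (INR n). 2: lra.
  field_simplify; lra.
Qed.

(** * Power series *)

Definition Csum (u : nat -> C) : C :=
  match excluded_middle_informative (ex_series (K := C_AbsRing) (V := C_NormedModule) u) with
  | left H => proj1_sig (constructive_indefinite_description _ H)
  | right _ => 0%C
  end.

Lemma Csum_correct (u : nat -> C) : ex_series (K := C_AbsRing) (V := C_NormedModule) u ->
  is_series (V := C_NormedModule) u (Csum u).
Proof.
  intros H. unfold Csum. destruct excluded_middle_informative as [H'|H']; [|contradiction].
  apply (proj2_sig (constructive_indefinite_description _ H')).
Qed.

Lemma is_series_C_unique (u : nat -> C) (l1 l2 : C) :
  is_series (V := C_NormedModule) u l1 -> is_series (V := C_NormedModule) u l2 -> l1 = l2.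
Proof. intros H1 H2. apply (filterlim_locally_unique (sum_n u) l1 l2 H1 H2). Qed.

Lemma Cmod_sum_n_geom_le (u : nat -> C) (A q : R) : 0 <= A -> 0 <= q < 1 ->
  (forall m, Cmod (u m) <= A * q ^ m) ->
  forall N, Cmod (sum_n u N) <= A * (1 - q ^ S N) / (1 - q).
Proof.
  intros HA Hq Hu N. induction N as [|N IH].
  - rewrite sum_O. eapply Rle_trans; [apply Hu|]. right. simpl. field. lra.
  - rewrite sum_Sn. change (plus ?a ?b) with (Cplus a b).
    eapply Rle_trans; [apply Cmod_triangle|].
    eapply Rle_trans; [apply Rplus_le_compat; [apply IH|apply Hu]|].
    right. simpl. field. lra.
Qed.

Lemma is_series_Cmod_geom_le (u : nat -> C) (l : C) (A q : R) : 0 <= A -> 0 <= q < 1 ->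
  is_series (V := C_NormedModule) u l -> (forall m, Cmod (u m) <= A * q ^ m) ->
  Cmod l <= A / (1 - q).
Proof.
  intros HA Hq Hs Hu. apply (filterlim_Cmod_le (sum_n u)); auto.
  intros N. eapply Rle_trans; [apply (Cmod_sum_n_geom_le u A q HA Hq Hu)|].
  assert (0 <= q ^ S N) by (apply pow_le; lra).
  unfold Rdiv. apply Rmult_le_compat_r; [left; apply Rinv_0_lt_compat; lra|]. nra.
Qed.

Lemma ex_series_C_geom (u : nat -> C) (A q : R) : 0 <= A -> 0 <= q < 1 ->
  (forall m, Cmod (u m) <= A * q ^ m) -> ex_series (K := C_AbsRing) (V := C_NormedModule) u.
Proof.
  intros HA Hq Hu.
  assert (H : ex_series (K := C_AbsRing) (V := C_CompleteNormedModule) u).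
  { apply ex_series_le with (b := fun j => A * q ^ j); [apply Hu|].
    exists (A * / (1 - q)).
    apply (is_series_scal_l (K := R_AbsRing) (V := R_NormedModule) A (fun j => q ^ j)).
    apply is_series_geom. rewrite Rabs_pos_eq; lra. }
  exact H.
Qed.

Lemma is_series_at_0 (c : nat -> C) :
  is_series (V := C_NormedModule) (fun m => c m * 0 ^ m)%C (c 0%nat).
Proof.
  assert (Hs : forall N, sum_n (fun m => c m * 0 ^ m)%C N = c 0%nat).
  { induction N as [|N IH].
    - rewrite sum_O. simpl. match goal with |- ?a = ?b => change (@eq C a b) end. ring.
    - rewrite sum_Sn, IH. change (plus ?a ?b) with (Cplus a b).
      rewrite Cpow_S. match goal with |- ?a = ?b => change (@eq C a b) end. ring. }
  unfold is_series. eapply filterlim_ext; [intros N; symmetry; apply Hs|].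
  apply filterlim_const.
Qed.

Lemma INR_sq_succ_le_pow3 (m : nat) : INR m ^ 2 + 1 <= 3 ^ m.
Proof.
  induction m as [|m IH]; [simpl; lra|].
  rewrite S_INR. simpl pow in *. assert (0 <= INR m) by apply pos_INR. nra.
Qed.

Definition pser (c : nat -> C) (x : C) : C := Csum (fun m => c m * x ^ m)%C.
Definition pser_deriv (c : nat -> C) (x : C) : C :=
  Csum (fun m => c m * RtoC (INR m) * x ^ (pred m))%C.

(* On the disc of radius [r0 / 6] the terms and their derivatives decay like [6^-m] and [2^-m]. *)
Section PowerSeries.
Variables (c : nat -> C) (r0 Mb : R).
Hypothesis Hr0 : 0 < r0.
Hypothesis Hcoef : forall m, Cmod (c m) * r0 ^ m <= Mb.

Let rc := r0 / 6.

Lemma pser_bound_nonneg : 0 <= Mb.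
Proof. assert (H := Hcoef 0%nat). simpl in H. assert (H0 := Cmod_ge_0 (c 0%nat)). lra. Qed.

Lemma pser_coef_decay m : Cmod (c m) * rc ^ m <= Mb * (/6) ^ m.
Proof.
  unfold rc, Rdiv. rewrite Rpow_mult_distr.
  assert (H := Hcoef m). assert (0 <= (/6) ^ m) by (apply pow_le; lra). nra.
Qed.

Lemma pser_term_bound x m : Cmod x <= rc -> Cmod (c m * x ^ m) <= Mb * (/6) ^ m.
Proof.
  intros Hx. rewrite Cmod_mult, Cmod_pow. eapply Rle_trans; [|apply pser_coef_decay].
  apply Rmult_le_compat_l; [apply Cmod_ge_0|]. apply pow_incr. split; auto. apply Cmod_ge_0.
Qed.

Lemma pser_deriv_term_bound x m : Cmod x <= rc ->
  Cmod (c m * RtoC (INR m) * x ^ (pred m)) <= Mb / rc * (/2) ^ m.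
Proof.
  intros Hx. assert (HR : 0 < rc) by (unfold rc; lra). assert (HMb := pser_bound_nonneg).
  rewrite !Cmod_mult, Cmod_R, Cmod_pow, Rabs_pos_eq by apply pos_INR.
  destruct m as [|k].
  - simpl. rewrite Rmult_0_r, Rmult_0_l. apply Rmult_le_pos; [|lra].
    unfold Rdiv. apply Rmult_le_pos; auto. left; apply Rinv_0_lt_compat; auto.
  - simpl pred. apply Rmult_le_reg_l with rc; auto.
    assert (H1 : Cmod x ^ k <= rc ^ k) by (apply pow_incr; split; auto; apply Cmod_ge_0).
    assert (H2 := pser_coef_decay (S k)). assert (H3 := INR_sq_succ_le_pow3 (S k)).
    assert (H4 : INR (S k) <= 3 ^ S k).
    { assert (1 <= INR (S k)) by (rewrite S_INR; assert (H5 := pos_INR k); lra). nra. }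
    assert (H6 : 0 <= Cmod (c (S k))) by apply Cmod_ge_0.
    assert (H7 : 0 <= INR (S k)) by apply pos_INR.
    apply Rle_trans with (Cmod (c (S k)) * INR (S k) * rc ^ S k).
    { simpl (rc ^ S k).
      replace (rc * (Cmod (c (S k)) * INR (S k) * Cmod x ^ k))
        with ((Cmod (c (S k)) * INR (S k)) * (rc * Cmod x ^ k)) by ring.
      apply Rmult_le_compat_l; [nra|]. apply Rmult_le_compat_l; lra. }
    apply Rle_trans with (Mb * (/6) ^ S k * INR (S k)).
    { assert (0 <= rc ^ S k) by (apply pow_le; lra). nra. }
    replace (rc * (Mb / rc * (/ 2) ^ S k)) with (Mb * (/2) ^ S k) by (field; lra).
    replace ((/2) ^ S k) with ((/6) ^ S k * 3 ^ S k)
      by (rewrite <- Rpow_mult_distr; f_equal; field).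
    assert (0 <= (/6) ^ S k) by (apply pow_le; lra).
    replace (Mb * ((/6) ^ S k * 3 ^ S k)) with ((Mb * (/6) ^ S k) * 3 ^ S k) by ring.
    apply Rmult_le_compat_l; [apply Rmult_le_pos|]; lra.
Qed.

Lemma is_series_pser x : Cmod x <= rc ->
  is_series (V := C_NormedModule) (fun m => c m * x ^ m)%C (pser c x).
Proof.
  intros Hx. apply Csum_correct, ex_series_C_geom with Mb (/6).
  - apply pser_bound_nonneg.
  - lra.
  - intros m. apply pser_term_bound; auto.
Qed.

Lemma is_series_pser_deriv x : Cmod x <= rc ->
  is_series (V := C_NormedModule) (fun m => c m * RtoC (INR m) * x ^ (pred m))%C (pser_deriv c x).
Proof.
  intros Hx. assert (HMb := pser_bound_nonneg).
  apply Csum_correct, ex_series_C_geom with (Mb / rc) (/2).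
  - unfold Rdiv. apply Rmult_le_pos; auto. left. apply Rinv_0_lt_compat. unfold rc. lra.
  - lra.
  - intros m. apply pser_deriv_term_bound; auto.
Qed.

Lemma pser_0 : pser c 0%C = c 0%nat.
Proof.
  apply is_series_C_unique with (fun m => c m * 0 ^ m)%C.
  - apply is_series_pser. rewrite Cmod_0. unfold rc. lra.
  - apply is_series_at_0.
Qed.

Lemma pser_deriv_bound x : Cmod x <= rc -> Cmod (pser_deriv c x) <= 2 * Mb / rc.
Proof.
  intros Hx. replace (2 * Mb / rc) with (Mb / rc / (1 - /2)) by (unfold rc; field; lra).
  apply is_series_Cmod_geom_le
    with (fun m => c m * RtoC (INR m) * x ^ (pred m))%C; auto.
  - unfold Rdiv. apply Rmult_le_pos; [apply pser_bound_nonneg|].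
    left. apply Rinv_0_lt_compat. unfold rc. lra.
  - lra.
  - apply is_series_pser_deriv; auto.
  - intros m. apply pser_deriv_term_bound; auto.
Qed.

Lemma pser_remainder_series x y : Cmod x <= rc -> Cmod y <= rc ->
  is_series (V := C_NormedModule)
    (fun m => c m * (y ^ m - x ^ m - RtoC (INR m) * x ^ (pred m) * (y - x)))%C
    (pser c y - pser c x - pser_deriv c x * (y - x))%C.
Proof.
  intros Hx Hy.
  assert (H1 := is_series_minus _ _ _ _ (is_series_pser y Hy) (is_series_pser x Hx)).
  assert (H2 := is_series_scal_l (K := C_AbsRing) (V := C_NormedModule) (y - x)%C _ _
                  (is_series_pser_deriv x Hx)).
  assert (H3 := is_series_minus _ _ _ _ H1 H2).
  replace (pser c y - pser c x - pser_deriv c x * (y - x))%C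
    with (plus (plus (pser c y) (opp (pser c x))) (opp (scal (y - x)%C (pser_deriv c x)))).
  2:{ unfold plus, opp, scal; simpl. change (@mult C_Ring ?a ?b) with (Cmult a b).
      match goal with |- ?a = ?b => change (@eq C a b) end. ring. }
  eapply is_series_ext; [|exact H3]. intros m. simpl.
  unfold plus, opp, scal; simpl. change (@mult C_Ring ?a ?b) with (Cmult a b).
  match goal with |- ?a = ?b => change (@eq C a b) end. ring.
Qed.

Lemma pser_taylor x y : Cmod x <= rc -> Cmod y <= rc ->
  Cmod (pser c y - pser c x - pser_deriv c x * (y - x)) <= 2 * Mb / rc ^ 2 * Cmod (y - x) ^ 2.
Proof.
  intros Hx Hy. assert (HR : 0 < rc) by (unfold rc; lra). assert (HMb := pser_bound_nonneg).
  assert (Hd0 := Cmod_ge_0 (y - x)).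
  replace (2 * Mb / rc ^ 2 * Cmod (y - x) ^ 2)
    with (Mb / rc ^ 2 * Cmod (y - x) ^ 2 / (1 - /2)) by (field; lra).
  assert (HMR : 0 <= Mb / rc ^ 2)
    by (unfold Rdiv; apply Rmult_le_pos; [auto|left; apply Rinv_0_lt_compat; nra]).
  apply (is_series_Cmod_geom_le
    (fun m => c m * (y ^ m - x ^ m - RtoC (INR m) * x ^ (pred m) * (y - x)))%C _
    (Mb / rc ^ 2 * Cmod (y - x) ^ 2) (/2)); [nra|lra|apply pser_remainder_series; auto|].
  intros m. rewrite Cmod_mult.
  assert (Hp := Cpow_taylor x y rc m HR Hx Hy).
  apply Rmult_le_reg_l with (rc ^ 2); [nra|].
  set (E := Cmod (y ^ m - x ^ m - RtoC (INR m) * x ^ pred m * (y - x))) in *.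
  assert (HE : 0 <= E) by apply Cmod_ge_0.
  apply Rle_trans with (Cmod (c m) * (INR m ^ 2 * rc ^ m * Cmod (y - x) ^ 2)).
  { assert (0 <= Cmod (c m)) by apply Cmod_ge_0. nra. }
  replace (rc ^ 2 * (Mb / rc ^ 2 * Cmod (y - x) ^ 2 * (/ 2) ^ m))
    with (Mb * (/2) ^ m * Cmod (y - x) ^ 2) by (field; lra).
  assert (H3 := INR_sq_succ_le_pow3 m). assert (H6 := pser_coef_decay m).
  replace ((/2) ^ m) with ((/6) ^ m * 3 ^ m) by (rewrite <- Rpow_mult_distr; f_equal; field).
  assert (0 <= (/6) ^ m) by (apply pow_le; lra).
  assert (0 <= Cmod (y - x) ^ 2) by nra.
  assert (0 <= Cmod (c m) * rc ^ m) by (apply Rmult_le_pos; [apply Cmod_ge_0|apply pow_le; lra]).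
  assert (0 <= INR m ^ 2) by (apply pow_le, pos_INR).
  apply Rle_trans with ((Cmod (c m) * rc ^ m) * INR m ^ 2 * Cmod (y - x) ^ 2); [right; ring|].
  apply Rmult_le_compat_r; auto.
  apply Rle_trans with (Mb * (/6) ^ m * INR m ^ 2); [apply Rmult_le_compat_r; auto|].
  assert (0 <= Mb * (/6) ^ m) by (apply Rmult_le_pos; auto). nra.
Qed.

Lemma pser_sub_0_bound x : Cmod x <= rc -> Cmod x <= 1 ->
  Cmod (pser c x - c 0%nat) <= (2 * Mb / rc + 2 * Mb / rc ^ 2) * Cmod x.
Proof.
  intros Hx Hx1. assert (H0 : Cmod (RtoC 0) <= rc) by (rewrite Cmod_0; unfold rc; lra).
  assert (HR : 0 < rc) by (unfold rc; lra). assert (HMb := pser_bound_nonneg).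
  assert (H := pser_taylor 0%C x H0 Hx). rewrite pser_0 in H.
  replace (x - 0)%C with x in H by ring.
  replace (pser c x - c 0%nat)%C
    with ((pser c x - c 0%nat - pser_deriv c 0 * x) + pser_deriv c 0 * x)%C by ring.
  eapply Rle_trans; [apply Cmod_triangle|]. rewrite Cmod_mult.
  assert (Hd := pser_deriv_bound 0%C H0). assert (Hx0 := Cmod_ge_0 x).
  assert (Cmod x ^ 2 <= Cmod x) by (simpl; nra).
  assert (0 <= 2 * Mb / rc ^ 2) by (apply Rdiv_le_0_compat; nra).
  assert (2 * Mb / rc ^ 2 * Cmod x ^ 2 <= 2 * Mb / rc ^ 2 * Cmod x) by (apply Rmult_le_compat_l; auto).
  nra.
Qed.

End PowerSeries.

(** * Logarithmic and Laurent-series estimates *)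

Lemma ln_le_sub_1 (x : R) : 0 < x -> ln x <= x - 1.
Proof. intros H. assert (H1 := exp_ineq1_le (ln x)). rewrite exp_ln in H1; auto. lra. Qed.

Lemma ln_le_2sqrt (y : R) : 0 < y -> ln y <= 2 * sqrt y.
Proof.
  intros Hy. assert (Hs : 0 < sqrt y) by (apply sqrt_lt_R0; auto).
  replace y with (sqrt y * sqrt y) at 1 by (apply sqrt_sqrt; lra).
  rewrite ln_mult by auto. assert (H := ln_le_sub_1 (sqrt y) Hs). lra.
Qed.

Lemma mul_abs_ln_le_2sqrt (t : R) : 0 < t <= 1 -> t * Rabs (ln t) <= 2 * sqrt t.
Proof.
  intros Ht. assert (Hl : ln t <= 0).
  { destruct (Req_dec t 1) as [->|Hne]; [rewrite ln_1; lra|].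
    left. rewrite <- ln_1. apply ln_increasing; lra. }
  rewrite Rabs_left1, <- ln_Rinv by lra.
  assert (H := ln_le_2sqrt (/ t) ltac:(apply Rinv_0_lt_compat; lra)).
  assert (Hs : 0 < sqrt t) by (apply sqrt_lt_R0; lra).
  rewrite sqrt_inv in H.
  apply Rle_trans with (t * (2 * / sqrt t)); [apply Rmult_le_compat_l; lra|].
  replace t with (sqrt t * sqrt t) at 1 by (apply sqrt_sqrt; lra).
  right. field. lra.
Qed.

Lemma ln_1_plus_bounds (s : R) : -/2 <= s -> s - 2 * s ^ 2 <= ln (1 + s) <= s.
Proof.
  intros Hs. split.
  - assert (H := ln_le_sub_1 (/ (1 + s)) ltac:(apply Rinv_0_lt_compat; lra)).
    rewrite ln_Rinv in H by lra.
    assert (s / (1 + s) <= ln (1 + s)).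
    { replace (s / (1 + s)) with (- (/ (1 + s) - 1)) by (field; lra). lra. }
    assert (s - 2 * s ^ 2 <= s / (1 + s)).
    { apply Rmult_le_reg_r with (1 + s); [lra|].
      unfold Rdiv. rewrite Rmult_assoc, Rinv_l by lra. nra. }
    lra.
  - assert (H := ln_le_sub_1 (1 + s) ltac:(lra)). lra.
Qed.

Lemma ln_Cmod_1_plus_taylor (q : C) : Cmod q <= /4 ->
  Rabs (ln (Cmod (1 + q)) - Re q) <= 6 * Cmod q ^ 2.
Proof.
  intros Hq. destruct q as [q1 q2].
  assert (Hq0 := Cmod_ge_0 (q1, q2)).
  set (Q := Cmod (q1, q2) ^ 2) in *.
  assert (HQ : Q = q1 ^ 2 + q2 ^ 2) by (unfold Q; rewrite Cmod2_alt; reflexivity).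
  assert (HQ1 : Q <= / 16) by (unfold Q; nra).
  assert (Hq1 : Rabs q1 <= /4) by (assert (H := re_le_Cmod (q1, q2)); simpl in H; lra).
  set (s := 2 * q1 + Q).
  assert (Hm : Cmod (1 + (q1, q2)) = sqrt (1 + s)).
  { assert (Hs' : 1 + s = (1 + q1)^2 + q2^2) by (unfold s; rewrite HQ; ring).
    rewrite Hs'. unfold Cmod. simpl. f_equal. ring. }
  assert (Hs : - / 2 <= s) by (unfold s; assert (0 <= Q) by (unfold Q; nra); apply Rabs_le_between in Hq1; lra).
  assert (Hln : ln (sqrt (1 + s)) = ln (1 + s) / 2).
  { assert (H1 : 0 < sqrt (1 + s)) by (apply sqrt_lt_R0; lra).
    replace (ln (1 + s)) with (ln (sqrt (1 + s) * sqrt (1 + s))) by (rewrite sqrt_sqrt; auto; lra).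
    rewrite ln_mult by auto. field. }
  rewrite Hm, Hln. unfold Re; simpl fst.
  destruct (ln_1_plus_bounds s Hs) as [L1 L2].
  assert (Hs2 : s ^ 2 <= 5 * Q + Q).
  { unfold s. apply Rabs_le_between in Hq1. assert (0 <= Q) by (unfold Q; nra).
    assert (q1 ^ 2 <= Q) by nra.
    assert (H1 : 0 <= (/4 - q1) * Q) by (apply Rmult_le_pos; lra).
    assert (H2 : 0 <= Q * (/16 - Q)) by (apply Rmult_le_pos; lra).
    replace ((2 * q1 + Q) ^ 2) with (4 * q1 ^ 2 + 4 * q1 * Q + Q * Q) by ring. nra. }
  assert (Hsd : s = 2 * q1 + Q) by reflexivity. clearbody s. apply Rabs_le. split; nra.
Qed.

Lemma sqrt_ge_self (t : R) : 0 <= t <= 1 -> t <= sqrt t.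
Proof.
  intros Ht. assert (Hs := sqrt_pos t). assert (Hss : sqrt t * sqrt t = t) by (apply sqrt_sqrt; lra).
  assert (sqrt t <= 1). { rewrite <- sqrt_1. apply sqrt_le_1_alt. lra. } nra.
Qed.

Lemma Czpow_sub (w : C) (m n : nat) : w <> 0%C ->
  Czpow w (Z.of_nat m - Z.of_nat n) = (w ^ m / w ^ n)%C.
Proof.
  intros Hw. destruct (Z.of_nat m - Z.of_nat n)%Z eqn:E.
  - assert (m = n) by lia. subst. simpl. field. apply Cpow_nz; auto.
  - simpl. assert (Hm : m = (Pos.to_nat p + n)%nat) by lia. subst m.
    rewrite Cpow_add_r. field. apply Cpow_nz; auto.
  - simpl. assert (Hn : n = (Pos.to_nat p + m)%nat) by lia. subst n.
    rewrite Cpow_add_r. field. split; apply Cpow_nz; auto.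
Qed.

Lemma is_series_laurent_shift (a : Z -> C) (n : nat) (w s : C) : w <> 0%C ->
  is_series (V := C_NormedModule) (laurent_term a n w) s ->
  is_series (V := C_NormedModule) (fun m => a (Z.of_nat m - Z.of_nat n)%Z * w ^ m)%C (w ^ n * s)%C.
Proof.
  intros Hw H. assert (H' := is_series_scal_l (K := C_AbsRing) (V := C_NormedModule) (w ^ n)%C _ _ H).
  eapply is_series_ext; [|exact H']. intros m. unfold laurent_term. rewrite Czpow_sub by auto.
  unfold scal; simpl. repeat change (@mult C_Ring ?a ?b) with (Cmult a b).
  field. apply Cpow_nz; auto.
Qed.

Lemma sum_f_R0_ge_term (u : nat -> R) (m N : nat) :
  (forall j, 0 <= u j) -> (m <= N)%nat -> u m <= sum_f_R0 u N.
Proof.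
  intros Hu HmN. induction N as [|N IH].
  - assert (m = 0%nat) by lia. subst. simpl. lra.
  - destruct (Nat.eq_dec m (S N)) as [E|E].
    + subst. simpl. assert (0 <= sum_f_R0 u N) by (apply cond_pos_sum; auto). lra.
    + simpl. assert (u m <= sum_f_R0 u N) by (apply IH; lia). specialize (Hu (S N)). lra.
Qed.

Lemma is_series_C_terms_bounded (u : nat -> C) (l : C) : is_series (V := C_NormedModule) u l ->
  exists B, forall m, Cmod (u m) <= B.
Proof.
  intros H. destruct (proj1 (filterlim_C_Cmod (sum_n u) l) H 1 ltac:(lra)) as [N HN].
  exists (2 + sum_f_R0 (fun j => Cmod (u j)) N). intros m.
  assert (Hs : 0 <= sum_f_R0 (fun j => Cmod (u j)) N) by (apply cond_pos_sum; intros; apply Cmod_ge_0).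
  destruct (le_lt_dec m N) as [Hm|Hm].
  - assert (Cmod (u m) <= sum_f_R0 (fun j => Cmod (u j)) N) by (apply (sum_f_R0_ge_term (fun j => Cmod (u j))); auto; intros; apply Cmod_ge_0).
    lra.
  - destruct m as [|k]; [lia|].
    assert (E : u (S k) = (sum_n u (S k) - l - (sum_n u k - l))%C).
    { rewrite sum_Sn. unfold plus; simpl. match goal with |- ?a = ?b => change (@eq C a b) end. ring. }
    rewrite E. eapply Rle_trans; [apply Cmod_triangle|]. rewrite Cmod_opp.
    assert (H1 := HN (S k) ltac:(lia)). assert (H2 := HN k ltac:(lia)). lra.
Qed.

Lemma Cmod_inv_pow_scaled (x : C) (s : R) (k : nat) :
  0 < s -> s / 2 <= Cmod x -> Cmod (/ x ^ k) * s ^ k <= 2 ^ k.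
Proof.
  intros Hs Hx. destruct (Cinv_Cmod_le x (s / 2) ltac:(lra) Hx) as [Hx0 Hxi].
  rewrite <- Cpow_inv, Cmod_pow by auto.
  replace (2 ^ k) with ((/ (s / 2)) ^ k * s ^ k)
    by (rewrite <- Rpow_mult_distr; replace (/ (s / 2) * s) with 2 by (field; lra); reflexivity).
  apply Rmult_le_compat_r; [apply pow_le; lra|]. apply pow_incr. split; [apply Cmod_ge_0|auto].
Qed.

Lemma quotient_remainder_decomposition (P P' : C -> C) (a : C) (n : nat) (x y : C) :
  x <> 0%C -> y <> 0%C ->
  ((P y - a) / y ^ n - (P x - a) / x ^ n
     - (- RtoC (INR n) * (P x - a) / x ^ S n + P' x / x ^ n) * (y - x))%C
  = ((/ y ^ n - / x ^ n + RtoC (INR n) * / x ^ S n * (y - x)) * (P y - a)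
     + (- RtoC (INR n) * / x ^ S n) * (y - x) * (P y - P x)
     + / x ^ n * (P y - P x - P' x * (y - x)))%C.
Proof.
  intros Hx0 Hy0. rewrite !Cpow_S. field.
  repeat split; auto; apply Cpow_nz; auto.
Qed.

Section QuotientTaylor.
Variables (P P' : C -> C) (a : C) (n : nat) (LP DP KP s : R) (x y : C).
Hypothesis Hs : 0 < s <= 1.
Hypothesis Hx : s / 2 <= Cmod x.
Hypothesis Hy : s / 2 <= Cmod y <= 2 * s.
Hypothesis Hh : Cmod (y - x) <= 1.
Hypothesis HLP : 0 <= LP.
Hypothesis HKP : 0 <= KP.
Hypothesis HPa : Cmod (P y - a) <= LP * Cmod y.
Hypothesis HP' : Cmod (P' x) <= DP.
Hypothesis HPt : Cmod (P y - P x - P' x * (y - x)) <= KP * Cmod (y - x) ^ 2.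

Lemma quotient_taylor_term1 :
  Cmod (/ y ^ n - / x ^ n + RtoC (INR n) * / x ^ S n * (y - x)) * Cmod (P y - a) * s ^ (n + 2)
  <= (INR n ^ 2 + INR n) * 2 ^ (n + 3) * LP * Cmod (y - x) ^ 2.
Proof.
  set (phr := (/ y ^ n - / x ^ n + RtoC (INR n) * / x ^ S n * (y - x))%C).
  assert (Hphr : Cmod phr <= (INR n ^ 2 + INR n) * (/ (s / 2)) ^ (n + 2) * Cmod (y - x) ^ 2)
    by (apply Cinv_pow_taylor; lra).
  assert (HnR := pos_INR n). assert (Hh0 := Cmod_ge_0 (y - x)).
  assert (Hpp := Cmod_ge_0 phr). assert (Hpa := Cmod_ge_0 (P y - a)).
  assert (HA : Cmod phr * s ^ (n + 2) <= (INR n ^ 2 + INR n) * 2 ^ (n + 2) * Cmod (y - x) ^ 2).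
  { replace (2 ^ (n + 2)) with ((/ (s / 2)) ^ (n + 2) * s ^ (n + 2))
      by (rewrite <- Rpow_mult_distr; replace (/ (s / 2) * s) with 2 by (field; lra); reflexivity).
    assert (0 < s ^ (n + 2)) by (apply pow_lt; lra).
    apply Rle_trans with ((INR n ^ 2 + INR n) * (/ (s / 2)) ^ (n + 2) * Cmod (y - x) ^ 2 * s ^ (n + 2)).
    - apply Rmult_le_compat_r; lra.
    - right; ring. }
  assert (HB : Cmod (P y - a) <= 2 * LP) by nra.
  replace (2 ^ (n + 3)) with (2 ^ (n + 2) * 2) by (rewrite !pow_add; simpl; ring).
  assert (0 <= (INR n ^ 2 + INR n) * 2 ^ (n + 2) * Cmod (y - x) ^ 2).
  { apply Rmult_le_pos; [apply Rmult_le_pos; [nra|apply pow_le; lra]|nra]. }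
  apply Rle_trans with ((Cmod phr * s ^ (n + 2)) * Cmod (P y - a)); [right; ring|].
  apply Rle_trans with (((INR n ^ 2 + INR n) * 2 ^ (n + 2) * Cmod (y - x) ^ 2) * (2 * LP)).
  - apply Rmult_le_compat; auto. apply Rmult_le_pos; [auto|apply pow_le; lra].
  - right; ring.
Qed.

Lemma quotient_taylor_term2 :
  INR n * Cmod (/ x ^ S n) * Cmod (y - x) * Cmod (P y - P x) * s ^ (n + 2)
  <= INR n * 2 ^ (n + 1) * (DP + KP) * Cmod (y - x) ^ 2.
Proof.
  assert (HnR := pos_INR n). assert (Hh0 := Cmod_ge_0 (y - x)).
  assert (HPyx : Cmod (P y - P x) <= (DP + KP) * Cmod (y - x)).
  { replace (P y - P x)%C with ((P y - P x - P' x * (y - x)) + P' x * (y - x))%C by ring.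
    eapply Rle_trans; [apply Cmod_triangle|]. rewrite Cmod_mult.
    assert (Cmod (y - x) ^ 2 <= Cmod (y - x)) by (simpl; nra).
    assert (Cmod (P' x) * Cmod (y - x) <= DP * Cmod (y - x)) by (apply Rmult_le_compat_r; auto).
    assert (KP * Cmod (y - x) ^ 2 <= KP * Cmod (y - x)) by (apply Rmult_le_compat_l; auto).
    lra. }
  set (i1 := Cmod (/ x ^ S n)).
  assert (Hi1 : i1 * s ^ S n <= 2 ^ S n) by (apply Cmod_inv_pow_scaled; lra).
  assert (Hi1p : 0 <= i1) by apply Cmod_ge_0.
  replace (s ^ (n + 2)) with (s ^ S n * s) by (rewrite pow_add; simpl; ring).
  replace (n + 1)%nat with (S n) by lia.
  assert (Hs1 : i1 * s ^ S n * s <= 2 ^ S n).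
  { assert (0 <= i1 * s ^ S n) by (apply Rmult_le_pos; auto; apply pow_le; lra). nra. }
  assert (Hq := Cmod_ge_0 (P y - P x)).
  apply Rle_trans with (INR n * (i1 * s ^ S n * s) * (Cmod (y - x) * Cmod (P y - P x)));
    [right; ring|].
  apply Rle_trans with (INR n * 2 ^ S n * (Cmod (y - x) * ((DP + KP) * Cmod (y - x)))).
  - apply Rmult_le_compat.
    + apply Rmult_le_pos; auto. apply Rmult_le_pos; [apply Rmult_le_pos; auto; apply pow_le|]; lra.
    + apply Rmult_le_pos; auto.
    + apply Rmult_le_compat_l; auto.
    + apply Rmult_le_compat_l; auto.
  - right. simpl. ring.
Qed.

Lemma quotient_taylor_term3 :
  Cmod (/ x ^ n) * Cmod (P y - P x - P' x * (y - x)) * s ^ (n + 2) <= 2 ^ n * KP * Cmod (y - x) ^ 2.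
Proof.
  set (i0 := Cmod (/ x ^ n)).
  assert (Hi0 : i0 * s ^ n <= 2 ^ n) by (apply Cmod_inv_pow_scaled; lra).
  assert (Hi0p : 0 <= i0) by apply Cmod_ge_0. assert (Hh0 := Cmod_ge_0 (y - x)).
  replace (s ^ (n + 2)) with (s ^ n * (s * s)) by (rewrite pow_add; simpl; ring).
  assert (Hq := Cmod_ge_0 (P y - P x - P' x * (y - x))).
  assert (Hss : s * s <= 1) by nra.
  apply Rle_trans with ((i0 * s ^ n) * Cmod (P y - P x - P' x * (y - x)) * (s * s)); [right; ring|].
  apply Rle_trans with (2 ^ n * (KP * Cmod (y - x) ^ 2) * 1); [|right; ring].
  apply Rmult_le_compat; [apply Rmult_le_pos; auto; apply Rmult_le_pos; auto; apply pow_le; lra|nra| |auto].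
  apply Rmult_le_compat; auto. apply Rmult_le_pos; auto; apply pow_le; lra.
Qed.

Lemma quotient_taylor :
  Cmod ((P y - a) / y ^ n - (P x - a) / x ^ n
        - (- RtoC (INR n) * (P x - a) / x ^ S n + P' x / x ^ n) * (y - x)) * s ^ (n + 2)
  <= ((INR n ^ 2 + INR n) * 2 ^ (n + 3) * LP + INR n * 2 ^ (n + 1) * (DP + KP) + 2 ^ n * KP)
     * Cmod (y - x) ^ 2.
Proof.
  destruct (Cinv_Cmod_le x (s / 2) ltac:(lra) Hx) as [Hx0 _].
  destruct (Cinv_Cmod_le y (s / 2) ltac:(lra) ltac:(lra)) as [Hy0 _].
  rewrite quotient_remainder_decomposition by auto.
  assert (T1 := quotient_taylor_term1). assert (T2 := quotient_taylor_term2).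
  assert (T3 := quotient_taylor_term3).
  eapply Rle_trans.
  { apply Rmult_le_compat_r; [apply pow_le; lra|].
    eapply Rle_trans; [apply Cmod_triangle|]. apply Rplus_le_compat_r. apply Cmod_triangle. }
  rewrite !Cmod_mult, Cmod_opp, Cmod_R, Rabs_pos_eq by apply pos_INR.
  lra.
Qed.

End QuotientTaylor.

Lemma log_remainder_identity (A x q : C) : x <> 0%C -> 0 < Cmod (1 + q) ->
  (RtoC 2 * A * RtoC (ln (Cmod (x * (1 + q)))) - RtoC 2 * A * RtoC (ln (Cmod x))
   - A / x * (x * q) - A / Cconj x * Cconj (x * q))%C
  = (RtoC 2 * A * RtoC (ln (Cmod (1 + q)) - Re q))%C.
Proof.
  intros Hx0 H1q. assert (Hcx : Cconj x <> 0%C) by (apply Cconj_neq0; auto).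
  rewrite Cmod_mult, ln_mult by (auto; apply Cmod_gt_0; auto).
  rewrite Cmult_conj, !RtoC_plus, RtoC_minus.
  transitivity (RtoC 2 * A * RtoC (ln (Cmod (1 + q))) - A * (q + Cconj q))%C.
  - field. split; auto.
  - replace (q + Cconj q)%C with (RtoC (2 * Re q))
      by (destruct q as [q1 q2]; apply injective_projections; simpl; ring).
    rewrite RtoC_mult. ring.
Qed.

Lemma log_taylor (A x y : C) (s : R) : 0 < s -> s / 2 <= Cmod x -> Cmod (y - x) <= s / 8 ->
  Cmod (RtoC 2 * A * RtoC (ln (Cmod y)) - RtoC 2 * A * RtoC (ln (Cmod x))
        - A / x * (y - x) - A / Cconj x * Cconj (y - x)) * s ^ 2
  <= 48 * Cmod A * Cmod (y - x) ^ 2.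
Proof.
  intros Hs Hx Hh.
  destruct (Cinv_Cmod_le x (s / 2) ltac:(lra) Hx) as [Hx0 _].
  assert (Hxp : 0 < Cmod x) by lra.
  set (q := ((y - x) / x)%C).
  assert (Hq : Cmod q * Cmod x = Cmod (y - x)) by (unfold q; rewrite Cmod_div by auto; field; lra).
  assert (Hq4 : Cmod q <= / 4) by (apply Rmult_le_reg_r with (Cmod x); auto; rewrite Hq; lra).
  assert (H1q : 0 < Cmod (1 + q)).
  { assert (H := Cmod_reverse_triangle 1 q). rewrite Cmod_1 in H. lra. }
  replace y with (x * (1 + q))%C by (unfold q; field; auto).
  replace (x * (1 + q) - x)%C with (x * q)%C by ring.
  rewrite log_remainder_identity by auto.
  rewrite !Cmod_mult, !Cmod_R, (Rabs_pos_eq 2) by lra.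
  assert (Hl := ln_Cmod_1_plus_taylor q Hq4).
  assert (HA := Cmod_ge_0 A). assert (Hq0 := Cmod_ge_0 q).
  assert (Hqs : Cmod q ^ 2 * s ^ 2 <= 4 * (Cmod x * Cmod q) ^ 2).
  { assert (Hsx : s ^ 2 <= 4 * Cmod x ^ 2) by nra.
    apply Rle_trans with (Cmod q ^ 2 * (4 * Cmod x ^ 2)); [apply Rmult_le_compat_l; nra|].
    right; ring. }
  apply Rle_trans with (2 * Cmod A * (6 * Cmod q ^ 2) * s ^ 2); [|nra].
  apply Rmult_le_compat_r; [nra|]. apply Rmult_le_compat_l; [nra|auto].
Qed.

(** * The model equation *)

Lemma predicted_power_identity (a b c : C) :
  (Cmod a ^ 2 - Cmod b ^ 2) <> 0 -> (Cconj a * c - Cconj b * Cconj c)%C <> 0%C ->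
  (a * / (RtoC (Cmod a ^ 2 - Cmod b ^ 2) / (Cconj a * c - Cconj b * Cconj c))
   + Cconj b * / Cconj (RtoC (Cmod a ^ 2 - Cmod b ^ 2) / (Cconj a * c - Cconj b * Cconj c)))%C = c.
Proof.
  intros HD Hden.
  set (den := (Cconj a * c - Cconj b * Cconj c)%C) in *.
  set (D := Cmod a ^ 2 - Cmod b ^ 2) in *.
  assert (HD' : RtoC D <> 0%C) by (intro E; injection E; auto).
  assert (Hcd : Cconj den <> 0%C) by (intro E; apply Hden; rewrite <- (Cconj_conj den), E; apply injective_projections; simpl; ring).
  rewrite Cdiv_conj by auto.
  replace (Cconj (RtoC D)) with (RtoC D) by (apply injective_projections; simpl; ring).
  assert (Hnum : (a * den + Cconj b * Cconj den)%C = (RtoC D * c)%C).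
  { unfold den, D. rewrite Cminus_conj, !Cmult_conj, !Cconj_conj.
    rewrite RtoC_minus, !Cmod2_conj. ring. }
  transitivity ((a * den + Cconj b * Cconj den) / RtoC D)%C.
  field. auto.
  rewrite Hnum. field. auto.
Qed.

Lemma model_remainder_identity (an bn : C) (nR : R) (n : nat) (E e1 e2 : C -> C) (u v fu fv eta k0 : C) :
  u <> 0%C -> v <> 0%C ->
  fu = (an / u ^ n + Cconj bn / (Cconj u) ^ n + k0 + E u)%C ->
  fv = (an / v ^ n + Cconj bn / (Cconj v) ^ n + k0 + E v)%C ->
  ((fv - eta) - (fu - eta) - (- RtoC nR * an / u ^ S n + e1 u) * (v - u)
     - (- RtoC nR * Cconj bn / (Cconj u) ^ S n + e2 u) * Cconj (v - u))%C
  = (an * (/ v ^ n - / u ^ n + RtoC nR * / u ^ S n * (v - u))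
     + Cconj bn * Cconj (/ v ^ n - / u ^ n + RtoC nR * / u ^ S n * (v - u))
     + (E v - E u - e1 u * (v - u) - e2 u * Cconj (v - u)))%C.
Proof.
  intros Hu Hv -> ->.
  assert (Hun : (u ^ n)%C <> 0%C) by (apply Cpow_nz; auto).
  assert (Hvn : (v ^ n)%C <> 0%C) by (apply Cpow_nz; auto).
  assert (Hun1 : (u ^ S n)%C <> 0%C) by (apply Cpow_nz; auto).
  assert (Hcu : Cconj u <> 0%C) by (apply Cconj_neq0; auto).
  assert (Hcv : Cconj v <> 0%C) by (apply Cconj_neq0; auto).
  assert (Hcun : (Cconj u ^ n)%C <> 0%C) by (apply Cpow_nz; auto).
  assert (Hcvn : (Cconj v ^ n)%C <> 0%C) by (apply Cpow_nz; auto).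
  rewrite Cplus_conj, !Cminus_conj, !Cmult_conj, Cconj_RtoC.
  rewrite !Cinv_conj by auto. rewrite !Cpow_conj.
  rewrite !Cminus_conj. rewrite !Cpow_S.
  set (un := (u ^ n)%C) in *. set (vn := (v ^ n)%C) in *.
  set (cun := (Cconj u ^ n)%C) in *. set (cvn := (Cconj v ^ n)%C) in *.
  field. repeat split; auto.
Qed.

Section Model.
Variables (z0 : C) (f : C -> C) (n : nat) (an bn k0 : C) (E e1 e2 : C -> C) (rs C0 C1 C2 : R).
Hypothesis Hn : (1 <= n)%nat.
Hypothesis Hab : Cmod an <> Cmod bn.
Hypothesis Hrs : 0 < rs <= 1.
Hypothesis HC0 : 0 <= C0.
Hypothesis HC1 : 0 <= C1.
Hypothesis HC2 : 0 <= C2.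
Hypothesis Hmodel : forall z, 0 < Cmod (z - z0) <= rs ->
  f z = (an / (z - z0) ^ n + Cconj bn / (Cconj (z - z0)) ^ n + k0 + E (z - z0))%C.
Hypothesis HE : forall u, 0 < Cmod u <= rs -> Cmod (E u) * Cmod u ^ n <= C0 * sqrt (Cmod u).
Hypothesis He : forall u, 0 < Cmod u <= rs ->
  Cmod (e1 u) * Cmod u ^ S n <= C1 * sqrt (Cmod u) /\
  Cmod (e2 u) * Cmod u ^ S n <= C1 * sqrt (Cmod u).
Hypothesis HE_taylor : forall s u v, 0 < s -> 2 * s <= rs ->
  s / 2 <= Cmod u <= 2 * s -> s / 2 <= Cmod v <= 2 * s -> Cmod (v - u) <= s / 8 ->
  Cmod (E v - E u - e1 u * (v - u) - e2 u * Cconj (v - u)) * s ^ (n + 2)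
    <= C2 * Cmod (v - u) ^ 2.

Let nR := INR n.
Let dl := Rabs (Cmod an - Cmod bn).
Let Sg := Cmod an + Cmod bn.
Let Kl := Sg * (nR ^ 2 + nR) * 2 ^ (n + 2).
Let Qc := 4 * 2 ^ (n + 1) * (Kl + C2) / (nR * dl).
(* Newton-Kantorovich is applied on the ball of radius [lam |zeta - z0|] around each
   predicted point [zeta]; [lam * Qc < 1] is its contraction condition there. *)
Let lam := / (Qc + 16 + 2 * nR).

Lemma lam_pos : 0 < lam.
Proof.
  assert (HnR : 1 <= nR) by (apply (le_INR 1); auto).
  assert (Hdl : 0 < dl) by (apply Rabs_pos_lt; lra).
  assert (Ha := Cmod_ge_0 an). assert (Hb := Cmod_ge_0 bn).
  assert (HKl : 0 <= Kl) by (unfold Kl, Sg; apply Rmult_le_pos; [nra|apply pow_le; lra]).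
  assert (HQ : 0 <= Qc).
  { unfold Qc. apply Rdiv_le_0_compat; [|nra].
    assert (0 < 2 ^ (n + 1)) by (apply pow_lt; lra). nra. }
  unfold lam. apply Rinv_0_lt_compat. lra.
Qed.

Lemma half_lam_pos : 0 < lam / 2.
Proof. assert (H := lam_pos). lra. Qed.

Let eps0 := proj1_sig (constructive_indefinite_description _
  (near_root_of_unity n (lam / 2) Hn half_lam_pos)).

Lemma eps0_spec : 0 < eps0 /\ forall s, Cmod (s ^ n - 1) <= eps0 ->
  exists u, (u ^ n)%C = 1%C /\ Cmod (s - u) < lam / 2.
Proof.
  exact (proj2_sig (constructive_indefinite_description _
    (near_root_of_unity n (lam / 2) Hn half_lam_pos))).
Qed.

(* The error terms are [O(sqrt |z - z0|)] relative to the leading terms; the radius [rho]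
   is chosen with [sqrt rho <= 2 tau] so that they are dominated. *)
Let tau := Rmin (Rmin (nR * dl / (8 * (C1 + 1))) (lam * nR * dl / (8 * 2 ^ (n + 1) * (C0 + 1))))
                (dl * Rmin (/2) eps0 / (4 * (C0 + 1))).
Let sst := Rmin (rs / 2) (tau ^ 2).
Let rho := 2 * sst.
Let R0 := Sg / sst ^ n.

Lemma model_constants :
  1 <= nR /\ 0 < dl /\ 0 < Sg /\ dl <= Sg /\ 0 <= Kl /\ 0 <= Qc /\ 0 < lam /\ lam <= /16 /\
  2 * nR * lam < 1 /\ lam * Qc < 1 /\ 0 < tau /\ 0 < sst /\ sst <= rs / 2 /\ sqrt sst <= tau /\
  0 < R0.
Proof.
  assert (HnR : 1 <= nR) by (apply (le_INR 1); auto).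
  assert (Hdl : 0 < dl) by (apply Rabs_pos_lt; lra).
  assert (Ha := Cmod_ge_0 an). assert (Hb := Cmod_ge_0 bn).
  assert (HSg : 0 < Sg) by (unfold Sg; destruct (Req_dec (Cmod an) 0); lra).
  assert (HdS : dl <= Sg) by (unfold dl, Sg; unfold Rabs; destruct Rcase_abs; lra).
  assert (H2n : 0 < 2 ^ (n + 1)) by (apply pow_lt; lra).
  assert (HKl : 0 <= Kl) by (unfold Kl; apply Rmult_le_pos; [apply Rmult_le_pos; nra|apply pow_le; lra]).
  assert (HQ : 0 <= Qc) by (unfold Qc; apply Rdiv_le_0_compat; nra).
  assert (Hl := lam_pos).
  assert (Hl16 : lam <= /16) by (unfold lam; apply Rinv_le_contravar; lra).
  assert (Hl2 : 2 * nR * lam < 1).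
  { unfold lam. apply Rmult_lt_reg_r with (Qc + 16 + 2 * nR); [lra|].
    rewrite Rmult_assoc, Rinv_l by lra. lra. }
  assert (HlQ : lam * Qc < 1).
  { unfold lam. apply Rmult_lt_reg_r with (Qc + 16 + 2 * nR); [lra|].
    rewrite (Rmult_comm (/ _)), Rmult_assoc, Rinv_l by lra. lra. }
  assert (Htau : 0 < tau).
  { unfold tau. destruct eps0_spec as [Heps _].
    assert (0 < Rmin (/2) eps0) by (apply Rmin_pos; lra).
    assert (0 < nR * dl) by nra. assert (0 < lam * nR * dl) by (rewrite Rmult_assoc; nra).
    assert (0 < 8 * 2 ^ (n + 1) * (C0 + 1)) by (apply Rmult_lt_0_compat; lra).
    repeat apply Rmin_pos; apply Rdiv_lt_0_compat; nra. }
  assert (Hsst : 0 < sst) by (unfold sst; apply Rmin_pos; nra).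
  assert (Hsst2 : sst <= rs / 2) by (unfold sst; apply Rmin_l).
  assert (Hsq : sqrt sst <= tau).
  { rewrite <- (sqrt_pow2 tau) by lra. apply sqrt_le_1_alt. unfold sst. apply Rmin_r. }
  assert (HR0 : 0 < R0) by (unfold R0; apply Rdiv_lt_0_compat; auto; apply pow_lt; auto).
  repeat split; auto.
Qed.

Lemma sqrt_le_2tau (t : R) : 0 <= t <= 4 * sst -> sqrt t <= 2 * tau.
Proof.
  intros Ht. destruct model_constants as (_ & _ & _ & _ & _ & _ & _ & _ & _ & _ & Htau & Hsst & _ & Hsq & _).
  apply Rle_trans with (sqrt 4 * sqrt sst).
  - rewrite <- sqrt_mult by lra. apply sqrt_le_1_alt. lra.
  - replace (sqrt 4) with 2; [nra|]. rewrite <- (sqrt_pow2 2) by lra. f_equal. ring.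
Qed.

Lemma Cmod_near_center (x zeta : C) : Cmod (x - zeta) < lam * Cmod (zeta - z0) ->
  Cmod (zeta - z0) / 2 <= Cmod (x - z0) <= 2 * Cmod (zeta - z0).
Proof.
  intros Hx. destruct model_constants as (_ & _ & _ & _ & _ & _ & Hl & Hl16 & _).
  assert (H1 := Cmod_triangle (x - zeta) (zeta - z0)).
  assert (H2 := Cmod_reverse_triangle (zeta - z0) (x - zeta)).
  replace (x - zeta + (zeta - z0))%C with (x - z0)%C in H1 by ring.
  replace (zeta - z0 + (x - zeta))%C with (x - z0)%C in H2 by ring.
  assert (H0 := Cmod_ge_0 (zeta - z0)).
  assert (lam * Cmod (zeta - z0) <= Cmod (zeta - z0) / 16) by nra. split; lra.
Qed.

Let al (x : C) : C := (- RtoC nR * an / (x - z0) ^ S n + e1 (x - z0))%C.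
Let be (x : C) : C := (- RtoC nR * Cconj bn / (Cconj (x - z0)) ^ S n + e2 (x - z0))%C.

Lemma model_remainder (eta : C) (s : R) (x y : C) : 0 < s -> 2 * s <= rs ->
  s / 2 <= Cmod (x - z0) <= 2 * s -> s / 2 <= Cmod (y - z0) <= 2 * s -> Cmod (y - x) <= s / 8 ->
  Cmod ((f y - eta) - (f x - eta) - al x * (y - x) - be x * Cconj (y - x))
    <= (Kl + C2) / s ^ (n + 2) * Cmod (y - x) ^ 2.
Proof.
  intros Hs Hs2 Hx Hy Hh.
  set (u := (x - z0)%C) in *. set (v := (y - z0)%C) in *.
  assert (Hu0 : u <> 0%C) by (intro E0; rewrite E0, Cmod_0 in Hx; lra).
  assert (Hv0 : v <> 0%C) by (intro E0; rewrite E0, Cmod_0 in Hy; lra).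
  assert (Hyx : (y - x)%C = (v - u)%C) by (unfold u, v; ring).
  assert (HsP : 0 < s ^ (n + 2)) by (apply pow_lt; auto).
  unfold al, be. rewrite Hyx in *. fold u.
  rewrite (model_remainder_identity an bn nR n E e1 e2 u v (f x) (f y) eta k0 Hu0 Hv0);
    [|apply Hmodel; fold u; split; lra|apply Hmodel; fold v; split; lra].
  set (R1 := (/ v ^ n - / u ^ n + RtoC nR * / u ^ S n * (v - u))%C).
  set (Er := (E v - E u - e1 u * (v - u) - e2 u * Cconj (v - u))%C).
  assert (HR1 : Cmod R1 <= (nR ^ 2 + nR) * (2 ^ (n + 2) / s ^ (n + 2)) * Cmod (v - u) ^ 2).
  { unfold R1, nR. eapply Rle_trans; [apply (Cinv_pow_taylor n u v (s / 2)); lra|].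
    right. f_equal. f_equal. replace (/ (s / 2)) with (2 * / s) by (field; lra).
    rewrite Rpow_mult_distr, pow_inv. unfold Rdiv. ring. }
  assert (HEr : Cmod Er <= C2 / s ^ (n + 2) * Cmod (v - u) ^ 2).
  { assert (H := HE_taylor s u v Hs Hs2 Hx Hy Hh). fold Er in H.
    apply Rmult_le_reg_r with (s ^ (n + 2)); auto.
    replace (C2 / s ^ (n + 2) * Cmod (v - u) ^ 2 * s ^ (n + 2)) with (C2 * Cmod (v - u) ^ 2)
      by (field; lra).
    auto. }
  eapply Rle_trans; [apply Cmod_triangle|].
  eapply Rle_trans; [apply Rplus_le_compat_r, Cmod_triangle|].
  rewrite !Cmod_mult, !Cmod_conj.
  assert (Ha := Cmod_ge_0 an). assert (Hb := Cmod_ge_0 bn). assert (HR1p := Cmod_ge_0 R1).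
  set (T := (nR ^ 2 + nR) * (2 ^ (n + 2) / s ^ (n + 2)) * Cmod (v - u) ^ 2) in *.
  apply Rle_trans with ((Cmod an + Cmod bn) * T + C2 / s ^ (n + 2) * Cmod (v - u) ^ 2); [nra|].
  right. unfold T, Kl, Sg. field. lra.
Qed.

Lemma model_e_small (u : C) : 0 < Cmod u <= rs -> sqrt (Cmod u) <= 2 * tau ->
  Cmod (e1 u) * Cmod u ^ S n <= nR * dl / 4 /\ Cmod (e2 u) * Cmod u ^ S n <= nR * dl / 4.
Proof.
  intros Hu Hsq. destruct model_constants as (HnR & Hdl & _).
  assert (Htau1 : tau <= nR * dl / (8 * (C1 + 1)))
    by (unfold tau; eapply Rle_trans; [apply Rmin_l|apply Rmin_l]).
  assert (HC1s : C1 * sqrt (Cmod u) <= nR * dl / 4).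
  { apply Rle_trans with (C1 * (2 * (nR * dl / (8 * (C1 + 1))))).
    - apply Rmult_le_compat_l; auto. lra.
    - apply Rmult_le_reg_r with (8 * (C1 + 1)); [lra|].
      replace (C1 * (2 * (nR * dl / (8 * (C1 + 1)))) * (8 * (C1 + 1)))
        with (C1 * (2 * (nR * dl))) by (field; lra).
      nra. }
  destruct (He u Hu). split; lra.
Qed.

Lemma model_nondeg (x : C) : 0 < Cmod (x - z0) <= rs -> sqrt (Cmod (x - z0)) <= 2 * tau ->
  nR * dl / 2 / Cmod (x - z0) ^ S n <= Rabs (Cmod (al x) - Cmod (be x)).
Proof.
  intros Hx Hsq.
  destruct model_constants as (HnR & Hdl & _).
  destruct (model_e_small (x - z0) Hx Hsq) as [He1 He2].
  unfold al, be. set (u := (x - z0)%C) in *. set (t := Cmod u) in *.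
  assert (Hu0 : u <> 0%C) by (intro E0; unfold t in Hx; rewrite E0, Cmod_0 in Hx; lra).
  assert (HtS : 0 < t ^ S n) by (apply pow_lt; lra).
  assert (He1' : Cmod (e1 u) <= nR * dl / 4 / t ^ S n).
  { apply Rmult_le_reg_r with (t ^ S n); auto.
    replace (nR * dl / 4 / t ^ S n * t ^ S n) with (nR * dl / 4) by (field; lra). lra. }
  assert (He2' : Cmod (e2 u) <= nR * dl / 4 / t ^ S n).
  { apply Rmult_le_reg_r with (t ^ S n); auto.
    replace (nR * dl / 4 / t ^ S n * t ^ S n) with (nR * dl / 4) by (field; lra). lra. }
  set (P1 := (- RtoC nR * an / u ^ S n)%C).
  set (P2 := (- RtoC nR * Cconj bn / Cconj u ^ S n)%C).
  assert (Hdiff : Rabs (Cmod P1 - Cmod P2) = nR * dl / t ^ S n).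
  { unfold P1, P2, Cdiv.
    rewrite !Cmod_mult, !Cmod_opp, !Cmod_R, !Cmod_inv, !Cmod_pow, !Cmod_conj
      by (apply Cpow_nz; try apply Cconj_neq0; auto).
    rewrite (Rabs_pos_eq nR) by lra. fold t.
    replace (nR * Cmod an * / t ^ S n - nR * Cmod bn * / t ^ S n)
      with ((nR / t ^ S n) * (Cmod an - Cmod bn)) by (field; lra).
    rewrite Rabs_mult, Rabs_pos_eq; [unfold dl; field; lra|].
    apply Rdiv_le_0_compat; lra. }
  assert (HA1 := Cmod_triangle P1 (e1 u)). assert (HA2 := Cmod_reverse_triangle P1 (e1 u)).
  assert (HB1 := Cmod_triangle P2 (e2 u)). assert (HB2 := Cmod_reverse_triangle P2 (e2 u)).
  revert Hdiff. unfold Rabs. destruct (Rcase_abs (Cmod P1 - Cmod P2)); destruct Rcase_abs;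
    intros Hd; try lra;
    replace (nR * dl / 2 / t ^ S n) with (nR * dl / t ^ S n - 2 * (nR * dl / 4 / t ^ S n))
      by (field; lra);
    lra.
Qed.

Section Eta.
Variable eta : C.
Hypothesis Hc_large : R0 < Cmod (eta - k0).
Let c := (eta - k0)%C.
Let den := (Cconj an * c - Cconj bn * Cconj c)%C.
Let Dr := Cmod an ^ 2 - Cmod bn ^ 2.
Let w := Cdiv (RtoC Dr) den.
Let F := fun z => Cminus (f z) eta.

Lemma w_facts : c <> 0%C /\ den <> 0%C /\ w <> 0%C /\ Cmod w < sst ^ n /\
  (an * / w + Cconj bn * / Cconj w)%C = c.
Proof.
  destruct model_constants as (HnR & Hdl & HSg & HdS & _ & _ & _ & _ & _ & _ & _ & Hsst & _ & _ & HR0p).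
  assert (Hc : 0 < Cmod c) by (unfold c; lra).
  assert (Hc0 : c <> 0%C) by (intro E0; rewrite E0, Cmod_0 in Hc; lra).
  assert (Hden : dl * Cmod c <= Cmod den).
  { assert (H := Cmod_add_conj_lower (Cconj an) (- Cconj bn)%C c).
    rewrite Cmod_opp, !Cmod_conj in H. unfold den.
    replace (Cconj an * c - Cconj bn * Cconj c)%C with (Cconj an * c + - Cconj bn * Cconj c)%C by ring.
    auto. }
  assert (Hden0 : den <> 0%C).
  { intro E0. rewrite E0, Cmod_0 in Hden. nra. }
  assert (HD : Rabs Dr = dl * Sg).
  { unfold Dr, dl, Sg. replace (Cmod an ^ 2 - Cmod bn ^ 2) with ((Cmod an - Cmod bn) * (Cmod an + Cmod bn)) by ring.
    rewrite Rabs_mult. f_equal. apply Rabs_pos_eq. assert (H := Cmod_ge_0 an). assert (H' := Cmod_ge_0 bn). lra. }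
  assert (HD0 : Dr <> 0) by (intro E0; rewrite E0, Rabs_R0 in HD; nra).
  assert (Hw0 : w <> 0%C).
  { unfold w. intro E0. apply HD0. assert (H := f_equal (fun z => (z * den)%C) E0). simpl in H.
    replace (RtoC Dr / den * den)%C with (RtoC Dr) in H by (field; auto).
    rewrite Cmult_0_l in H. injection H; auto. }
  assert (Hwm : Cmod w <= Sg / Cmod c).
  { unfold w. rewrite Cmod_div, Cmod_R, HD by auto.
    assert (0 < Cmod den) by nra.
    apply Rle_trans with (dl * Sg / (dl * Cmod c)).
    - unfold Rdiv. apply Rmult_le_compat_l; [nra|]. apply Rinv_le_contravar; nra.
    - right. field. lra. }
  assert (Hws : Sg / Cmod c < sst ^ n).
  { assert (Hp : 0 < sst ^ n) by (apply pow_lt; auto).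
    assert (Hc' : Sg / sst ^ n < Cmod c) by exact Hc_large.
    apply (Rmult_lt_reg_r (Cmod c)); auto. unfold Rdiv. rewrite Rmult_assoc, Rinv_l, Rmult_1_r by lra.
    apply (Rmult_lt_compat_r (sst ^ n)) in Hc'; auto.
    unfold Rdiv in Hc'. rewrite Rmult_assoc, Rinv_l, Rmult_1_r in Hc' by lra. lra. }
  repeat split; auto; [lra|].
  unfold w, Dr, den. apply predicted_power_identity; auto.
Qed.

Lemma solution_in_model_disc (z : C) : 0 < Cmod (z - z0) < rho -> 0 < Cmod (z - z0) <= rs.
Proof.
  destruct model_constants as (_ & _ & _ & _ & _ & _ & _ & _ & _ & _ & _ & _ & Hsst2 & _). unfold rho. lra.
Qed.

Section Prediction.
Variable zeta : C.
Hypothesis Hzeta : ((zeta - z0) ^ n)%C = w.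
Let s := Cmod (zeta - z0).

Lemma prediction_scale : 0 < s < sst.
Proof.
  destruct model_constants as (_ & _ & _ & _ & _ & _ & _ & _ & _ & _ & _ & Hsst & _).
  destruct w_facts as (_ & _ & Hw0 & Hws & _).
  assert (Hsn : s ^ n = Cmod w) by (unfold s; rewrite <- Cmod_pow, Hzeta; auto).
  assert (Hs0 : 0 < s).
  { apply Cmod_gt_0. intro E0. apply Hw0. rewrite <- Hzeta, E0. apply Cpow_0_l; auto. }
  split; auto. apply pow_lt_reg with n; lra.
Qed.

Lemma F_at_prediction : F zeta = E (zeta - z0).
Proof.
  destruct model_constants as (_ & _ & _ & _ & _ & _ & _ & _ & _ & _ & _ & _ & Hsst2 & _).
  destruct w_facts as (_ & _ & _ & _ & Hwid). destruct prediction_scale as [Hs0 Hs1].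
  unfold F. rewrite Hmodel by (fold s; split; lra).
  rewrite <- Cpow_conj, Hzeta. unfold Cdiv. rewrite (Cmult_comm an), (Cmult_comm (Cconj bn)).
  replace (/ w * an + / Cconj w * Cconj bn + k0 + E (zeta - z0) - eta)%C
    with ((an * / w + Cconj bn * / Cconj w) + k0 + E (zeta - z0) - eta)%C by ring.
  rewrite Hwid. unfold c. ring.
Qed.

Let M := 2 * (2 * s) ^ S n / (nR * dl).
Let K := (Kl + C2) / s ^ (n + 2).

Lemma prediction_residual : 2 * (M * Cmod (F zeta)) < lam * s.
Proof.
  destruct model_constants as (HnR & Hdl & _ & _ & _ & _ & Hl & _ & _ & _ & Htau & Hsst & Hsst2 & Hsq & _).
  destruct prediction_scale as [Hs0 Hs1].
  rewrite F_at_prediction.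
  assert (H := HE (zeta - z0) ltac:(fold s; split; lra)). fold s in H.
  assert (Htau2 : tau <= lam * nR * dl / (8 * 2 ^ (n + 1) * (C0 + 1)))
    by (unfold tau; eapply Rle_trans; [apply Rmin_l|apply Rmin_r]).
  assert (Hsqs' : sqrt s <= tau) by (eapply Rle_trans; [|apply Hsq]; apply sqrt_le_1_alt; lra).
  assert (Hp2 : 0 < 2 ^ (n + 1)) by (apply pow_lt; lra).
  assert (HEs : Cmod (E (zeta - z0)%C) <= C0 * sqrt s / s ^ n).
  { apply Rmult_le_reg_r with (s ^ n). apply pow_lt; lra.
    unfold Rdiv. rewrite Rmult_assoc, Rinv_l by (apply pow_nonzero; lra). lra. }
  unfold M. replace (2 * s) with (s * 2) by ring. rewrite Rpow_mult_distr.
  replace (S n) with (n + 1)%nat by lia.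
  apply Rle_lt_trans with (2 * (2 * (s ^ (n + 1) * 2 ^ (n + 1)) / (nR * dl) * (C0 * sqrt s / s ^ n))).
  { apply Rmult_le_compat_l. lra. apply Rmult_le_compat_l. apply Rdiv_le_0_compat. 
    apply Rmult_le_pos. lra. apply Rmult_le_pos; apply pow_le; lra. nra. auto. }
  replace (2 * (2 * (s ^ (n + 1) * 2 ^ (n + 1)) / (nR * dl) * (C0 * sqrt s / s ^ n)))
    with (s * (4 * 2 ^ (n + 1) * C0 * sqrt s / (nR * dl))).
  2:{ replace (s ^ (n + 1)) with (s ^ n * s) by (rewrite pow_add; ring). field. repeat split; try lra; apply pow_nonzero; lra. }
  rewrite (Rmult_comm lam s). apply Rmult_lt_compat_l; auto.
  apply Rmult_lt_reg_r with (nR * dl). nra.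
  unfold Rdiv. rewrite Rmult_assoc, Rinv_l, Rmult_1_r by nra.
  assert (Hsp : 0 <= sqrt s) by apply sqrt_pos.
  apply Rle_lt_trans with (4 * 2 ^ (n + 1) * C0 * (lam * nR * dl / (8 * 2 ^ (n + 1) * (C0 + 1)))).
  { apply Rmult_le_compat_l. apply Rmult_le_pos; lra. lra. }
  replace (4 * 2 ^ (n + 1) * C0 * (lam * nR * dl / (8 * 2 ^ (n + 1) * (C0 + 1))))
    with (lam * nR * dl * (C0 / (2 * (C0 + 1)))) by (field; lra).
  assert (C0 / (2 * (C0 + 1)) < 1).
  { apply Rmult_lt_reg_r with (2 * (C0 + 1)). lra. unfold Rdiv. rewrite Rmult_assoc, Rinv_l by lra. lra. }
  assert (0 < lam * nR * dl) by (apply Rmult_lt_0_compat; nra). nra.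
Qed.

Lemma prediction_contract : 2 * (lam * s) * M * K < 1.
Proof.
  destruct model_constants as (HnR & Hdl & _ & _ & _ & _ & _ & _ & _ & HlQ & _).
  destruct prediction_scale as [Hs0 _].
  replace (2 * (lam * s) * M * K) with (lam * Qc); auto.
  unfold M, K, Qc. rewrite Rpow_mult_distr. replace (n + 2)%nat with (S (S n)) by lia.
  replace (n + 1)%nat with (S n) by lia. simpl. field.
  repeat split; try lra; try (apply pow_nonzero; lra).
Qed.

Lemma prediction_newton :
  exists L, HN_converges_to F zeta L /\ f L = eta /\ Cmod (L - zeta) < lam * s /\
    (forall y, Cmod (y - zeta) < lam * s -> f y = eta -> y = L).
Proof.
  destruct model_constants as (HnR & Hdl & _ & _ & HKl & _ & Hl & Hl16 & _ & _ & _ & Hsst & Hsst2 & _).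
  destruct prediction_scale as [Hs0 Hs1].
  assert (Hball : forall x, Cmod (x - zeta) < lam * s ->
            s / 2 <= Cmod (x - z0) <= 2 * s /\ 0 < Cmod (x - z0) <= rs).
  { intros x Hx. destruct (Cmod_near_center x zeta Hx) as [H1 H2]. fold s in H1, H2.
    split; split; lra. }
  assert (HM : 0 < M).
  { unfold M. apply Rdiv_lt_0_compat; [apply Rmult_lt_0_compat; [lra|apply pow_lt; lra]|nra]. }
  assert (HK : 0 <= K) by (unfold K; apply Rdiv_le_0_compat; [lra|apply pow_lt; lra]).
  destruct (harmonic_Newton_Kantorovich F al be zeta (lam * s) M K) as (L & HLc & HL0 & HLd & HLu);
    auto.
  - nra.
  - intros x y Hx Hy. destruct (Hball x Hx) as [Hx1 _]. destruct (Hball y Hy) as [Hy1 _].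
    apply model_remainder; auto; try lra.
    replace (y - x)%C with ((y - zeta) - (x - zeta))%C by ring.
    eapply Rle_trans; [apply Cmod_triangle|]. rewrite Cmod_opp. nra.
  - intros x Hx. destruct (Hball x Hx) as [Hx1 Hx2].
    eapply Rle_trans; [|apply model_nondeg; auto; apply sqrt_le_2tau; lra].
    assert (Hts : Cmod (x - z0) ^ S n <= (2 * s) ^ S n) by (apply pow_incr; lra).
    assert (0 < Cmod (x - z0) ^ S n) by (apply pow_lt; lra).
    replace (/ M) with (nR * dl / 2 / (2 * s) ^ S n)
      by (unfold M; field; repeat split; try lra; apply pow_nonzero; lra).
    unfold Rdiv. apply Rmult_le_compat_l; [nra|]. apply Rinv_le_contravar; auto.
  - apply prediction_residual.
  - apply prediction_contract.
  - exists L. split; [exact HLc|]. split; [|split].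
    + unfold F in HL0. cbv beta in HL0. replace (f L) with (f L - eta + eta)%C by ring. rewrite HL0. ring.
    + assert (H := prediction_residual). lra.
    + intros y Hy Hfy. apply HLu; [lra|]. unfold F. rewrite Hfy. ring.
Qed.

End Prediction.

Lemma model_E_small (u : C) : 0 < Cmod u < rho ->
  Cmod (E u) * Cmod u ^ n <= dl * Rmin (/2) eps0 / 2.
Proof.
  intros Hu. destruct model_constants as (_ & Hdl & _ & _ & _ & _ & _ & _ & _ & _ & Htau & Hsst & Hsst2 & _).
  set (m := Rmin (/2) eps0).
  assert (Hm : 0 < m) by (unfold m; destruct eps0_spec; apply Rmin_pos; lra).
  assert (Htau3 : tau <= dl * m / (4 * (C0 + 1))) by (unfold tau; apply Rmin_r).
  assert (Hsqu : sqrt (Cmod u) <= 2 * tau) by (apply sqrt_le_2tau; unfold rho in Hu; lra).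
  assert (HEu := HE u ltac:(unfold rho in Hu; split; lra)).
  apply Rle_trans with (C0 * (2 * (dl * m / (4 * (C0 + 1))))).
  { eapply Rle_trans; [apply HEu|]. apply Rmult_le_compat_l; lra. }
  replace (C0 * (2 * (dl * m / (4 * (C0 + 1))))) with ((dl * m / 2) * (C0 / (C0 + 1)))
    by (field; lra).
  assert (C0 / (C0 + 1) <= 1).
  { apply Rmult_le_reg_r with (C0 + 1); [lra|].
    unfold Rdiv. rewrite Rmult_assoc, Rinv_l by lra. lra. }
  assert (0 < dl * m / 2) by (apply Rmult_lt_0_compat; [nra|lra]). nra.
Qed.

(* Since [an / w + conj (bn / w) = c], the model equation [f z = eta] says that [1 / (z - z0)^n]
   solves the same real-linear equation as [1 / w] up to the error [E (z - z0)]. *)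
Lemma solution_inverse_power_close (z : C) : 0 < Cmod (z - z0) < rho -> f z = eta ->
  Cmod (/ (z - z0) ^ n - / w) <= Rmin (/2) eps0 / 2 * Cmod (/ (z - z0) ^ n).
Proof.
  intros Hz Hfz.
  destruct model_constants as (_ & Hdl & _).
  destruct w_facts as (Hc0 & Hden0 & Hw0 & _ & Hwid).
  assert (HEu := model_E_small (z - z0) Hz).
  set (u := (z - z0)%C) in *.
  assert (Hu0 : u <> 0%C) by (intro E0; rewrite E0, Cmod_0 in Hz; lra).
  assert (Hun : (u ^ n)%C <> 0%C) by (apply Cpow_nz; auto).
  assert (Hf := Hmodel z (solution_in_model_disc z Hz)). fold u in Hf. rewrite Hfz in Hf.
  set (U := (/ u ^ n)%C).
  set (V := (U - / w)%C).
  assert (HV : (an * V + Cconj bn * Cconj V)%C = (- E u)%C).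
  { unfold V, U. rewrite Cminus_conj, !Cinv_conj, Cpow_conj by auto.
    replace (an * (/ u ^ n - / w) + Cconj bn * (/ Cconj u ^ n - / Cconj w))%C
      with ((an / u ^ n + Cconj bn / Cconj u ^ n) - (an * / w + Cconj bn * / Cconj w))%C
      by (unfold Cdiv; ring).
    rewrite Hwid. unfold c. rewrite Hf. ring. }
  assert (Hl1 := Cmod_add_conj_lower an (Cconj bn) V).
  rewrite HV, Cmod_opp, Cmod_conj in Hl1. fold dl in Hl1.
  assert (HUm : Cmod U * Cmod u ^ n = 1).
  { unfold U. rewrite Cmod_inv, Cmod_pow by auto. field.
    rewrite <- Cmod_pow. apply Cmod_gt_0 in Hun. lra. }
  assert (Hpun : 0 < Cmod u ^ n) by (apply pow_lt; lra).
  apply Rmult_le_reg_l with dl; auto. eapply Rle_trans; [apply Hl1|].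
  apply Rmult_le_reg_r with (Cmod u ^ n); auto.
  replace (dl * (Rmin (/2) eps0 / 2 * Cmod U) * Cmod u ^ n)
    with (dl * Rmin (/2) eps0 / 2 * (Cmod U * Cmod u ^ n)) by (unfold Rdiv; ring).
  rewrite HUm. lra.
Qed.

Lemma solution_near_prediction (z zeta0 : C) :
  0 < Cmod (z - z0) < rho -> f z = eta -> (zeta0 ^ n)%C = w ->
  exists u, (u ^ n)%C = 1%C /\ Cmod (z - (z0 + zeta0 * u)) < lam * Cmod zeta0.
Proof.
  intros Hz Hfz Hzeta0.
  destruct model_constants as (_ & _ & _ & _ & _ & _ & Hl & _).
  destruct w_facts as (_ & _ & Hw0 & _ & _).
  destruct eps0_spec as [Heps Hroot].
  assert (Hzeta00 : zeta0 <> 0%C).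
  { intro E0. apply Hw0. rewrite <- Hzeta0, E0. apply Cpow_0_l; auto. }
  assert (HV := solution_inverse_power_close z Hz Hfz).
  set (u := (z - z0)%C) in *.
  assert (Hu0 : u <> 0%C) by (intro E0; rewrite E0, Cmod_0 in Hz; lra).
  assert (HUp : 0 < Cmod (/ u ^ n)).
  { rewrite Cmod_inv by (apply Cpow_nz; auto). apply Rinv_0_lt_compat, Cmod_gt_0, Cpow_nz; auto. }
  assert (HU0 : (/ u ^ n)%C <> 0%C) by (intro E0; rewrite E0, Cmod_0 in HUp; lra).
  set (sg := (u / zeta0)%C).
  assert (Hsg : (sg ^ n - 1)%C = (- (/ u ^ n - / w) / / u ^ n)%C).
  { unfold sg. unfold Cdiv. rewrite Cpow_mult_l, Cpow_inv, Hzeta0 by auto.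
    field. repeat split; auto; apply Cpow_nz; auto. }
  assert (Hsgb : Cmod (sg ^ n - 1) <= eps0).
  { rewrite Hsg. unfold Cdiv. rewrite Cmod_mult, Cmod_opp, Cmod_inv by auto.
    apply Rle_trans with (Rmin (/2) eps0 / 2).
    - apply Rmult_le_reg_r with (Cmod (/ u ^ n)); auto.
      rewrite Rmult_assoc, Rinv_l by lra. lra.
    - assert (Rmin (/2) eps0 <= eps0) by apply Rmin_r. lra. }
  destruct (Hroot sg Hsgb) as [v [Hv1 Hv2]].
  exists v. split; auto.
  replace (z - (z0 + zeta0 * v))%C with (zeta0 * (sg - v))%C by (unfold sg, u; field; auto).
  rewrite Cmod_mult. assert (0 < Cmod zeta0) by (apply Cmod_gt_0; auto).
  apply Rlt_le_trans with (Cmod zeta0 * (lam / 2)); [apply Rmult_lt_compat_l; auto|]. nra.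
Qed.

Lemma prediction_limit_in_disc (zeta L : C) : ((zeta - z0) ^ n)%C = w ->
  Cmod (L - zeta) < lam * Cmod (zeta - z0) -> 0 < Cmod (L - z0) < rho.
Proof.
  intros Hzeta HL. destruct (prediction_scale zeta Hzeta) as [Hs0 Hs1].
  destruct (Cmod_near_center L zeta HL). unfold rho. split; lra.
Qed.

Lemma prediction_converges (zeta : C) : ((zeta - z0) ^ n)%C = w ->
  exists L, HN_converges_to F zeta L /\ 0 < Cmod (L - z0) < rho /\ f L = eta.
Proof.
  intros Hzeta. destruct (prediction_newton zeta Hzeta) as (L & HL1 & HL2 & HL3 & _).
  exists L. split; [exact HL1|]. split; [|exact HL2].
  apply (prediction_limit_in_disc zeta L); auto.
Qed.

(* Two predicted points with a common limit are less than [2 lam s] apart, whereas distinct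
   [n]-th roots of [w], of modulus [s], are at least [s / n] apart. *)
Lemma prediction_limit_injective (zeta1 zeta2 L : C) :
  ((zeta1 - z0) ^ n)%C = w -> ((zeta2 - z0) ^ n)%C = w ->
  HN_converges_to F zeta1 L -> HN_converges_to F zeta2 L -> zeta1 = zeta2.
Proof.
  intros Hz1 Hz2 [_ HC1'] [_ HC2'].
  destruct model_constants as (HnR & _ & _ & _ & _ & _ & Hl & _ & Hl2 & _).
  destruct (prediction_newton zeta1 Hz1) as (L1 & [_ HL1c] & _ & HL1d & _).
  destruct (prediction_newton zeta2 Hz2) as (L2 & [_ HL2c] & _ & HL2d & _).
  assert (Hs1 := prediction_scale zeta1 Hz1).
  rewrite <- (filterlim_locally_unique _ L L1 HC1' HL1c) in HL1d.
  rewrite <- (filterlim_locally_unique _ L L2 HC2' HL2c) in HL2d.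
  set (s1 := Cmod (zeta1 - z0)) in *. set (s2 := Cmod (zeta2 - z0)) in *.
  assert (Hs12 : s1 = s2).
  { apply pow_inj with n; auto; try apply Cmod_ge_0.
    unfold s1, s2. rewrite <- !Cmod_pow, Hz1, Hz2. auto. }
  assert (Hd : Cmod (zeta2 - zeta1) < 2 * lam * s1).
  { replace (zeta2 - zeta1)%C with ((L - zeta1) - (L - zeta2))%C by ring.
    eapply Rle_lt_trans; [apply Cmod_triangle|]. rewrite Cmod_opp, Hs12 in *. lra. }
  assert (Hz10 : (zeta1 - z0)%C <> 0%C)
    by (intro E0; unfold s1 in Hs1; rewrite E0, Cmod_0 in Hs1; lra).
  set (v := ((zeta2 - z0) / (zeta1 - z0))%C).
  assert (Hv : (v ^ n)%C = 1%C).
  { unfold v, Cdiv. rewrite Cpow_mult_l, Cpow_inv, Hz1, Hz2 by auto. field. apply w_facts. }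
  destruct (Ceq_dec v 1) as [Hv1|Hv1].
  { replace zeta2 with (v * (zeta1 - z0) + z0)%C by (unfold v; field; auto).
    rewrite Hv1. ring. }
  exfalso. assert (Hsep := root_of_unity_separation v n Hn Hv Hv1). fold nR in Hsep.
  replace (Cmod (v - 1)) with (Cmod (zeta2 - zeta1) / s1) in Hsep.
  2:{ unfold v. replace ((zeta2 - z0) / (zeta1 - z0) - 1)%C with ((zeta2 - zeta1) / (zeta1 - z0))%C
        by (field; auto).
      rewrite Cmod_div by auto. auto. }
  assert (nR * (Cmod (zeta2 - zeta1) / s1) < 1); [|lra].
  apply Rmult_lt_reg_r with s1; [lra|].
  replace (nR * (Cmod (zeta2 - zeta1) / s1) * s1) with (nR * Cmod (zeta2 - zeta1)) by (field; lra).
  apply Rle_lt_trans with (nR * (2 * lam * s1)); [apply Rmult_le_compat_l; lra|]. nra.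
Qed.

Lemma predicted_point_pow (zeta0 u : C) : (zeta0 ^ n)%C = w -> (u ^ n)%C = 1%C ->
  (((z0 + zeta0 * u) - z0) ^ n)%C = w.
Proof.
  intros H0 Hu. replace ((z0 + zeta0 * u) - z0)%C with (zeta0 * u)%C by ring.
  rewrite Cpow_mult_l, H0, Hu. ring.
Qed.

Lemma Cmod_predicted_point (zeta0 u : C) : (u ^ n)%C = 1%C ->
  Cmod ((z0 + zeta0 * u) - z0) = Cmod zeta0.
Proof.
  intros Hu. replace ((z0 + zeta0 * u) - z0)%C with (zeta0 * u)%C by ring.
  rewrite Cmod_mult, (Cmod_root_of_unity u n Hn Hu). ring.
Qed.

Lemma solution_is_limit (z : C) : 0 < Cmod (z - z0) < rho -> f z = eta ->
  exists zeta, ((zeta - z0) ^ n)%C = w /\ HN_converges_to F zeta z.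
Proof.
  intros Hz Hfz. destruct w_facts as (_ & _ & Hw0 & _).
  destruct (exists_nth_root w n Hn Hw0) as [zeta0 Hzeta0].
  destruct (solution_near_prediction z zeta0 Hz Hfz Hzeta0) as [u [Hu Hzu]].
  assert (Hpow := predicted_point_pow zeta0 u Hzeta0 Hu).
  exists (z0 + zeta0 * u)%C. split; auto.
  destruct (prediction_newton _ Hpow) as (L & HL1 & _ & _ & HL4).
  rewrite Cmod_predicted_point in HL4 by auto.
  rewrite (HL4 z Hzu Hfz). auto.
Qed.

Lemma solutions_enumeration : exists sols : list C, length sols = n /\ NoDup sols /\
  forall z, In z sols <-> (0 < Cmod (z - z0) < rho /\ f z = eta).
Proof.
  destruct w_facts as (_ & _ & Hw0 & _).
  destruct (exists_nth_root w n Hn Hw0) as [zeta0 Hzeta0].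
  set (pred j := (z0 + zeta0 * unity_root n j)%C).
  assert (Hpred : forall j, ((pred j - z0) ^ n)%C = w)
    by (intros j; apply predicted_point_pow, unity_root_pow; auto).
  assert (Hmod : forall j, Cmod (pred j - z0) = Cmod zeta0)
    by (intros j; apply Cmod_predicted_point, unity_root_pow; auto).
  assert (Hex : forall j, exists L, HN_converges_to F (pred j) L /\ f L = eta /\
     Cmod (L - pred j) < lam * Cmod zeta0 /\
     (forall y, Cmod (y - pred j) < lam * Cmod zeta0 -> f y = eta -> y = L)).
  { intros j. rewrite <- (Hmod j). apply prediction_newton, Hpred. }
  set (Lf j := proj1_sig (constructive_indefinite_description _ (Hex j))).
  assert (HLf : forall j, HN_converges_to F (pred j) (Lf j) /\ f (Lf j) = eta /\
     Cmod (Lf j - pred j) < lam * Cmod zeta0 /\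
     (forall y, Cmod (y - pred j) < lam * Cmod zeta0 -> f y = eta -> y = Lf j))
    by (intros j; exact (proj2_sig (constructive_indefinite_description _ (Hex j)))).
  exists (map Lf (seq 0 n)). split; [|split].
  - rewrite length_map, length_seq. auto.
  - apply NoDup_map_NoDup_ForallPairs; [|apply seq_NoDup].
    intros j k Hj Hk Heq. apply in_seq in Hj. apply in_seq in Hk.
    destruct (HLf j) as [Hcj _]. destruct (HLf k) as [Hck _]. rewrite Heq in Hcj.
    apply (unity_root_affine_inj n j k z0 zeta0); try lia.
    + intro E0. apply Hw0. rewrite <- Hzeta0, E0. apply Cpow_0_l; auto.
    + exact (prediction_limit_injective _ _ _ (Hpred j) (Hpred k) Hcj Hck).
  - intros z. split.
    + intros Hin. apply in_map_iff in Hin. destruct Hin as [j [Hj _]]. subst z.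
      destruct (HLf j) as (_ & Hf & Hd & _). split; auto.
      apply (prediction_limit_in_disc (pred j)); [apply Hpred|]. rewrite Hmod. auto.
    + intros [Hz Hfz]. destruct (solution_near_prediction z zeta0 Hz Hfz Hzeta0) as [u [Hu Hzu]].
      destruct (root_of_unity_enum n u Hn Hu) as [j [Hj ->]].
      apply in_map_iff. exists j. split; [|apply in_seq; lia].
      destruct (HLf j) as (_ & _ & _ & Huniq). symmetry. apply Huniq; auto.
Qed.

End Eta.

Theorem model_solutions : exists rho0 : R, 0 < rho0 <= rs /\
  exists R00 : R, forall eta : C,
    let c := Cminus eta k0 in
    R00 < Cmod c ->
    let w := Cdiv (RtoC ((Cmod an)^2 - (Cmod bn)^2))
                  (Cminus (Cmult (Cconj an) c) (Cmult (Cconj bn) (Cconj c))) in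
    let F := fun z => Cminus (f z) eta in
    (exists sols : list C, length sols = n /\ NoDup sols /\
       forall z, In z sols <-> (0 < Cmod (Cminus z z0) < rho0 /\ f z = eta)) /\
    (forall zeta, Cpow (Cminus zeta z0) n = w ->
       exists L, HN_converges_to F zeta L /\
                 0 < Cmod (Cminus L z0) < rho0 /\ f L = eta) /\
    (forall zeta1 zeta2 L,
       Cpow (Cminus zeta1 z0) n = w -> Cpow (Cminus zeta2 z0) n = w ->
       HN_converges_to F zeta1 L -> HN_converges_to F zeta2 L -> zeta1 = zeta2) /\
    (forall z, 0 < Cmod (Cminus z z0) < rho0 -> f z = eta ->
       exists zeta, Cpow (Cminus zeta z0) n = w /\ HN_converges_to F zeta z).
Proof.
  destruct model_constants as (_ & _ & _ & _ & _ & _ & _ & _ & _ & _ & _ & Hsst & Hsst2 & _).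
  exists rho. split; [unfold rho; lra|].
  exists R0. intros eta c Hc w F. repeat split.
  - apply solutions_enumeration; auto.
  - apply prediction_converges; auto.
  - apply prediction_limit_injective; auto.
  - apply solution_is_limit; auto.
Qed.

End Model.

(** * Laurent expansions satisfy the model *)

Definition regular_part (P : C -> C) (a : C) (n : nat) (w : C) : C := ((P w - a) / w ^ n)%C.

Definition regular_part_deriv (P P' : C -> C) (a : C) (n : nat) (w : C) : C :=
  (- RtoC (INR n) * (P w - a) / w ^ S n + P' w / w ^ n)%C.

Lemma regular_part_bound (P : C -> C) (a : C) (n : nat) (L : R) (w : C) : w <> 0%C ->
  Cmod (P w - a) <= L * Cmod w -> Cmod (regular_part P a n w) * Cmod w ^ n <= L * Cmod w.
Proof.
  intros Hw0 H. assert (Hwn : (w ^ n)%C <> 0%C) by (apply Cpow_nz; auto).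
  unfold regular_part. rewrite Cmod_div, <- Cmod_pow by auto.
  replace (Cmod (P w - a) / Cmod (w ^ n) * Cmod (w ^ n)) with (Cmod (P w - a))
    by (field; apply Cmod_gt_0 in Hwn; lra).
  auto.
Qed.

Lemma regular_part_deriv_bound (P P' : C -> C) (a : C) (n : nat) (L D : R) (w : C) :
  w <> 0%C -> 0 <= L -> 0 <= D ->
  Cmod (P w - a) <= L * Cmod w -> Cmod (P' w) <= D ->
  Cmod (regular_part_deriv P P' a n w) * Cmod w ^ S n <= (INR n * L + D) * Cmod w.
Proof.
  intros Hw0 HL HD H1 H2. assert (Hwp : 0 < Cmod w) by (apply Cmod_gt_0; auto).
  assert (HnR := pos_INR n). unfold regular_part_deriv.
  eapply Rle_trans; [apply Rmult_le_compat_r; [apply pow_le, Cmod_ge_0|apply Cmod_triangle]|].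
  unfold Cdiv. rewrite !Cmod_mult, Cmod_opp, Cmod_R, Rabs_pos_eq by lra.
  rewrite !Cmod_inv, !Cmod_pow by (apply Cpow_nz; auto).
  assert (0 < Cmod w ^ n) by (apply pow_lt; lra).
  replace ((INR n * Cmod (P w - a) * / Cmod w ^ S n + Cmod (P' w) * / Cmod w ^ n) * Cmod w ^ S n)
    with (INR n * Cmod (P w - a) + Cmod (P' w) * Cmod w) by (simpl; field; split; lra).
  assert (INR n * Cmod (P w - a) <= INR n * (L * Cmod w)) by (apply Rmult_le_compat_l; lra).
  assert (Cmod (P' w) * Cmod w <= D * Cmod w) by (apply Rmult_le_compat_r; lra).
  lra.
Qed.

Section Laurent.
Variables (z0 : C) (r : R) (f : C -> C) (n : nat) (a b : Z -> C) (A : C).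
Hypothesis hr : 0 < r.
Hypothesis hn : (1 <= n)%nat.
Hypothesis hf : forall z, 0 < Cmod (Cminus z z0) < r ->
  exists sa sb : C,
    is_series (V := C_NormedModule) (laurent_term a n (Cminus z z0)) sa /\
    is_series (V := C_NormedModule) (laurent_term b n (Cminus z z0)) sb /\
    f z = Cplus (Cplus sa (Cconj sb)) (Cmult (Cmult (RtoC 2) A) (RtoC (ln (Cmod (Cminus z z0))))).

Let an := a (- Z.of_nat n)%Z.
Let bn := b (- Z.of_nat n)%Z.
Let k0 := Cplus (a 0%Z) (Cconj (b 0%Z)).
Let nR := INR n.

(* [w^n] times the Laurent series is a power series with these coefficients. *)
Let ca (m : nat) : C := a (Z.of_nat m - Z.of_nat n)%Z.
Let cb (m : nat) : C := b (Z.of_nat m - Z.of_nat n)%Z.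

Lemma laurent_coef_bounded :
  (exists Ba, forall m, Cmod (ca m) * (r / 2) ^ m <= Ba) /\
  (exists Bb, forall m, Cmod (cb m) * (r / 2) ^ m <= Bb).
Proof.
  set (w1 := RtoC (r / 2)).
  assert (Hw1 : Cmod w1 = r / 2) by (unfold w1; rewrite Cmod_R, Rabs_pos_eq; lra).
  assert (Hw10 : w1 <> 0%C) by (intro E; rewrite E, Cmod_0 in Hw1; lra).
  destruct (hf (z0 + w1)%C) as [sa [sb [Hsa [Hsb _]]]].
  { replace (Cminus (z0 + w1) z0) with w1 by (unfold Cminus; ring). lra. }
  replace (Cminus (z0 + w1) z0) with w1 in Hsa, Hsb by (unfold Cminus; ring).
  apply is_series_laurent_shift in Hsa; auto. apply is_series_laurent_shift in Hsb; auto.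
  destruct (is_series_C_terms_bounded _ _ Hsa) as [Ba HBa].
  destruct (is_series_C_terms_bounded _ _ Hsb) as [Bb HBb].
  split; [exists Ba|exists Bb]; intros m; [specialize (HBa m)|specialize (HBb m)];
    rewrite Cmod_mult, Cmod_pow, Hw1 in *; auto.
Qed.

Let Ba := proj1_sig (constructive_indefinite_description _ (proj1 laurent_coef_bounded)).
Let Bb := proj1_sig (constructive_indefinite_description _ (proj2 laurent_coef_bounded)).

Lemma Ba_spec m : Cmod (ca m) * (r / 2) ^ m <= Ba.
Proof. exact (proj2_sig (constructive_indefinite_description _ (proj1 laurent_coef_bounded)) m). Qed.

Lemma Bb_spec m : Cmod (cb m) * (r / 2) ^ m <= Bb.
Proof. exact (proj2_sig (constructive_indefinite_description _ (proj2 laurent_coef_bounded)) m). Qed.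

Let P := pser ca.
Let P' := pser_deriv ca.
Let Q := pser cb.
Let Q' := pser_deriv cb.
Let rdisc := r / 2 / 6.
Let DP := 2 * Ba / rdisc.
Let KP := 2 * Ba / rdisc ^ 2.
Let DQ := 2 * Bb / rdisc.
Let KQ := 2 * Bb / rdisc ^ 2.
Let LP := DP + KP.
Let LQ := DQ + KQ.
Let rs := Rmin (r / 12) (/2).

Lemma laurent_constants :
  0 < rdisc /\ 0 < rs <= /2 /\ rs <= rdisc /\ 0 <= DP /\ 0 <= KP /\ 0 <= DQ /\ 0 <= KQ.
Proof.
  assert (HBa := pser_bound_nonneg ca (r / 2) Ba Ba_spec).
  assert (HBb := pser_bound_nonneg cb (r / 2) Bb Bb_spec).
  assert (HR : 0 < rdisc) by (unfold rdisc; lra).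
  assert (Hrs0 : 0 < rs) by (unfold rs; apply Rmin_pos; lra).
  assert (Hrs1 : rs <= /2) by (unfold rs; apply Rmin_r).
  assert (Hrs2 : rs <= rdisc) by (unfold rs, rdisc; eapply Rle_trans; [apply Rmin_l|lra]).
  unfold DP, KP, DQ, KQ. repeat split; try lra; apply Rdiv_le_0_compat; nra.
Qed.

Let E (w : C) : C :=
  (regular_part P an n w - a 0%Z + Cconj (regular_part Q bn n w - b 0%Z)
   + RtoC 2 * A * RtoC (ln (Cmod w)))%C.
Let e1 (w : C) : C := (regular_part_deriv P P' an n w + A / w)%C.
Let e2 (w : C) : C := (Cconj (regular_part_deriv Q Q' bn n w) + A / Cconj w)%C.

Lemma laurent_P_linear x : Cmod x <= rs -> Cmod (P x - an) <= LP * Cmod x.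
Proof.
  intros Hx. destruct laurent_constants as (HR & Hrs & Hrs2 & _). unfold rdisc in *.
  apply (pser_sub_0_bound ca (r / 2) Ba); [lra|apply Ba_spec|lra|lra].
Qed.

Lemma laurent_Q_linear x : Cmod x <= rs -> Cmod (Q x - bn) <= LQ * Cmod x.
Proof.
  intros Hx. destruct laurent_constants as (HR & Hrs & Hrs2 & _). unfold rdisc in *.
  apply (pser_sub_0_bound cb (r / 2) Bb); [lra|apply Bb_spec|lra|lra].
Qed.

Lemma laurent_model_eq z : 0 < Cmod (z - z0) <= rs ->
  f z = (an / (z - z0) ^ n + Cconj bn / (Cconj (z - z0)) ^ n + k0 + E (z - z0))%C.
Proof.
  intros Hz. destruct laurent_constants as (HR & Hrs & Hrs2 & _). unfold rdisc in *.
  set (w := (z - z0)%C) in *.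
  assert (Hw0 : w <> 0%C) by (intro E0; rewrite E0, Cmod_0 in Hz; lra).
  assert (Hwn : (w ^ n)%C <> 0%C) by (apply Cpow_nz; auto).
  assert (Hcwn : (Cconj w ^ n)%C <> 0%C) by (apply Cpow_nz, Cconj_neq0; auto).
  destruct (hf z) as [sa [sb [Hsa [Hsb Hfz]]]]. { fold w. unfold rs in Hz. split; [lra|].
    eapply Rle_lt_trans; [apply Hz|]. eapply Rle_lt_trans; [apply Rmin_l|lra]. }
  fold w in Hsa, Hsb, Hfz.
  apply is_series_laurent_shift in Hsa; auto. apply is_series_laurent_shift in Hsb; auto.
  assert (Hsa' : sa = (P w / w ^ n)%C).
  { unfold P. rewrite <- (is_series_C_unique _ _ _ Hsa (is_series_pser ca (r / 2) Ba Ba_spec w ltac:(lra))).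
    field. auto. }
  assert (Hsb' : sb = (Q w / w ^ n)%C).
  { unfold Q. rewrite <- (is_series_C_unique _ _ _ Hsb (is_series_pser cb (r / 2) Bb Bb_spec w ltac:(lra))).
    field. auto. }
  rewrite Hfz, Hsa', Hsb'. unfold E, regular_part, k0.
  rewrite !Cminus_conj, !Cdiv_conj, !Cminus_conj, !Cpow_conj by auto.
  field. auto.
Qed.

Let C0 := LP + LQ + Cmod (a 0%Z) + Cmod (b 0%Z) + 4 * Cmod A.
Let C1 := nR * (LP + LQ) + DP + DQ + Cmod A.
Let C2 := ((nR ^ 2 + nR) * 2 ^ (n + 3) * LP + nR * 2 ^ (n + 1) * (DP + KP) + 2 ^ n * KP)
        + ((nR ^ 2 + nR) * 2 ^ (n + 3) * LQ + nR * 2 ^ (n + 1) * (DQ + KQ) + 2 ^ n * KQ)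
        + 48 * Cmod A.

Lemma laurent_E_bound w : 0 < Cmod w <= rs -> Cmod (E w) * Cmod w ^ n <= C0 * sqrt (Cmod w).
Proof.
  intros Hw. destruct laurent_constants as (HR & Hrs & Hrs2 & HDP & HKP & HDQ & HKQ).
  assert (Hw0 : w <> 0%C) by (intro E0; rewrite E0, Cmod_0 in Hw; lra).
  assert (Hw1 : Cmod w ^ n <= Cmod w) by (apply pow_le_self; auto; lra).
  assert (Hpn : 0 <= Cmod w ^ n) by (apply pow_le, Cmod_ge_0).
  assert (Hsq : Cmod w <= sqrt (Cmod w)) by (apply sqrt_ge_self; lra).
  assert (Hln : Cmod w * Rabs (ln (Cmod w)) <= 2 * sqrt (Cmod w))
    by (apply mul_abs_ln_le_2sqrt; lra).
  assert (HGP := regular_part_bound P an n LP w Hw0 (laurent_P_linear w ltac:(lra))).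
  assert (HGQ := regular_part_bound Q bn n LQ w Hw0 (laurent_Q_linear w ltac:(lra))).
  set (GP := regular_part P an n w) in *. set (GQ := regular_part Q bn n w) in *.
  assert (HE : Cmod (E w) <= Cmod GP + Cmod (a 0%Z) + Cmod GQ + Cmod (b 0%Z)
                             + 2 * Cmod A * Rabs (ln (Cmod w))).
  { unfold E. fold GP GQ. eapply Rle_trans; [apply Cmod_triangle|].
    eapply Rle_trans; [apply Rplus_le_compat_r, Cmod_triangle|].
    rewrite Cmod_conj, !Cmod_mult, !Cmod_R, (Rabs_pos_eq 2) by lra.
    assert (H1 := Cmod_triangle GP (- a 0%Z)). assert (H2 := Cmod_triangle GQ (- b 0%Z)).
    rewrite Cmod_opp in H1, H2. unfold Cminus. lra. }
  assert (HlnA : 2 * Cmod A * Rabs (ln (Cmod w)) * Cmod w ^ n <= 4 * Cmod A * sqrt (Cmod w)).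
  { assert (Hl0 := Rabs_pos (ln (Cmod w))). assert (HA := Cmod_ge_0 A).
    apply Rle_trans with (2 * Cmod A * (Cmod w * Rabs (ln (Cmod w)))); [|nra].
    replace (2 * Cmod A * Rabs (ln (Cmod w)) * Cmod w ^ n)
      with (2 * Cmod A * (Cmod w ^ n * Rabs (ln (Cmod w)))) by ring.
    apply Rmult_le_compat_l; [lra|]. apply Rmult_le_compat_r; auto. }
  apply Rle_trans with ((Cmod GP + Cmod (a 0%Z) + Cmod GQ + Cmod (b 0%Z)
                        + 2 * Cmod A * Rabs (ln (Cmod w))) * Cmod w ^ n).
  { apply Rmult_le_compat_r; auto. }
  assert (Ha0 := Cmod_ge_0 (a 0%Z)). assert (Hb0 := Cmod_ge_0 (b 0%Z)).
  assert (Cmod (a 0%Z) * Cmod w ^ n <= Cmod (a 0%Z) * sqrt (Cmod w))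
    by (apply Rmult_le_compat_l; lra).
  assert (Cmod (b 0%Z) * Cmod w ^ n <= Cmod (b 0%Z) * sqrt (Cmod w))
    by (apply Rmult_le_compat_l; lra).
  assert (LP * Cmod w <= LP * sqrt (Cmod w)) by (apply Rmult_le_compat_l; unfold LP; lra).
  assert (LQ * Cmod w <= LQ * sqrt (Cmod w)) by (apply Rmult_le_compat_l; unfold LQ; lra).
  unfold C0. nra.
Qed.

Lemma laurent_e_bound w : 0 < Cmod w <= rs ->
  Cmod (e1 w) * Cmod w ^ S n <= C1 * sqrt (Cmod w) /\
  Cmod (e2 w) * Cmod w ^ S n <= C1 * sqrt (Cmod w).
Proof.
  intros Hw. destruct laurent_constants as (HR & Hrs & Hrs2 & HDP & HKP & HDQ & HKQ).
  assert (Hw0 : w <> 0%C) by (intro E0; rewrite E0, Cmod_0 in Hw; lra).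
  assert (Hw1 : Cmod w ^ n <= Cmod w) by (apply pow_le_self; auto; lra).
  assert (Hsq : Cmod w <= sqrt (Cmod w)) by (apply sqrt_ge_self; lra).
  assert (HnR : 1 <= nR) by (apply (le_INR 1); auto).
  assert (HA := Cmod_ge_0 A).
  assert (HP' : Cmod (P' w) <= DP)
    by (apply (pser_deriv_bound ca (r / 2) Ba); [lra|apply Ba_spec|unfold rdisc in *; lra]).
  assert (HQ' : Cmod (Q' w) <= DQ)
    by (apply (pser_deriv_bound cb (r / 2) Bb); [lra|apply Bb_spec|unfold rdisc in *; lra]).
  assert (H1 := regular_part_deriv_bound P P' an n LP DP w Hw0 ltac:(unfold LP; lra) HDP
                  (laurent_P_linear w ltac:(lra)) HP').
  assert (H2 := regular_part_deriv_bound Q Q' bn n LQ DQ w Hw0 ltac:(unfold LQ; lra) HDQ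
                  (laurent_Q_linear w ltac:(lra)) HQ').
  assert (HAw : Cmod A * Cmod w ^ n <= Cmod A * Cmod w) by (apply Rmult_le_compat_l; lra).
  assert (HC1 : (nR * LP + DP) * Cmod w + Cmod A * Cmod w <= C1 * sqrt (Cmod w) /\
                (nR * LQ + DQ) * Cmod w + Cmod A * Cmod w <= C1 * sqrt (Cmod w)).
  { assert (0 <= nR * LP + DP) by (unfold LP; nra). assert (0 <= nR * LQ + DQ) by (unfold LQ; nra).
    assert (0 <= C1) by (unfold C1; nra).
    assert (C1 * Cmod w <= C1 * sqrt (Cmod w)) by (apply Rmult_le_compat_l; lra).
    unfold C1 in *. split; nra. }
  fold nR in H1, H2. destruct HC1 as [HC1P HC1Q].
  split.
  - unfold e1. eapply Rle_trans.
    { apply Rmult_le_compat_r; [apply pow_le, Cmod_ge_0|apply Cmod_triangle]. }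
    rewrite Rmult_plus_distr_r.
    replace (Cmod (A / w) * Cmod w ^ S n) with (Cmod A * Cmod w ^ n)
      by (rewrite Cmod_div by auto; simpl; field; lra).
    lra.
  - unfold e2. eapply Rle_trans.
    { apply Rmult_le_compat_r; [apply pow_le, Cmod_ge_0|apply Cmod_triangle]. }
    rewrite Rmult_plus_distr_r.
    replace (Cmod (A / Cconj w) * Cmod w ^ S n) with (Cmod A * Cmod w ^ n)
      by (rewrite Cmod_div, Cmod_conj by (apply Cconj_neq0; auto); simpl; field; lra).
    rewrite Cmod_conj. lra.
Qed.

Lemma laurent_E_taylor s x y : 0 < s -> 2 * s <= rs ->
  s / 2 <= Cmod x <= 2 * s -> s / 2 <= Cmod y <= 2 * s -> Cmod (y - x) <= s / 8 ->
  Cmod (E y - E x - e1 x * (y - x) - e2 x * Cconj (y - x)) * s ^ (n + 2)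
    <= C2 * Cmod (y - x) ^ 2.
Proof.
  intros Hs Hs2 Hx Hy Hh.
  destruct laurent_constants as (HR & Hrs & Hrs2 & HDP & HKP & HDQ & HKQ).
  assert (Hxr : Cmod x <= r / 2 / 6) by (unfold rdisc in *; lra).
  assert (Hyr : Cmod y <= r / 2 / 6) by (unfold rdisc in *; lra).
  assert (Hx0 : x <> 0%C) by (intro E0; rewrite E0, Cmod_0 in Hx; lra).
  assert (Hy0 : y <> 0%C) by (intro E0; rewrite E0, Cmod_0 in Hy; lra).
  set (Lg := (RtoC 2 * A * RtoC (ln (Cmod y)) - RtoC 2 * A * RtoC (ln (Cmod x))
              - A / x * (y - x) - A / Cconj x * Cconj (y - x))%C).
  replace (E y - E x - e1 x * (y - x) - e2 x * Cconj (y - x))%C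
    with ((regular_part P an n y - regular_part P an n x - regular_part_deriv P P' an n x * (y - x))
          + Cconj (regular_part Q bn n y - regular_part Q bn n x
                   - regular_part_deriv Q Q' bn n x * (y - x)) + Lg)%C.
  2:{ unfold E, e1, e2, Lg. rewrite !Cminus_conj, !Cmult_conj, !Cminus_conj.
      assert (Cconj x <> 0%C) by (apply Cconj_neq0; auto). field. auto. }
  assert (HG1 := quotient_taylor P P' an n LP DP KP s x y ltac:(lra) ltac:(lra) ltac:(lra)
                  ltac:(lra) ltac:(unfold LP; lra) HKP (laurent_P_linear y ltac:(lra))
                  (pser_deriv_bound ca (r / 2) Ba ltac:(lra) Ba_spec x Hxr)
                  (pser_taylor ca (r / 2) Ba ltac:(lra) Ba_spec x y Hxr Hyr)).
  assert (HG2 := quotient_taylor Q Q' bn n LQ DQ KQ s x y ltac:(lra) ltac:(lra) ltac:(lra)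
                  ltac:(lra) ltac:(unfold LQ; lra) HKQ (laurent_Q_linear y ltac:(lra))
                  (pser_deriv_bound cb (r / 2) Bb ltac:(lra) Bb_spec x Hxr)
                  (pser_taylor cb (r / 2) Bb ltac:(lra) Bb_spec x y Hxr Hyr)).
  fold nR in HG1, HG2. unfold regular_part, regular_part_deriv.
  assert (HL : Cmod Lg * s ^ (n + 2) <= 48 * Cmod A * Cmod (y - x) ^ 2).
  { assert (H := log_taylor A x y s Hs ltac:(lra) Hh). fold Lg in H.
    rewrite pow_add. assert (Hsn : s ^ n <= 1) by (apply pow_le_1; lra).
    assert (HX : 0 <= Cmod Lg * s ^ 2) by (apply Rmult_le_pos; [apply Cmod_ge_0|apply pow_le; lra]).
    replace (Cmod Lg * (s ^ n * s ^ 2)) with ((Cmod Lg * s ^ 2) * s ^ n) by ring. nra. }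
  assert (Hsp : 0 <= s ^ (n + 2)) by (apply pow_le; lra).
  eapply Rle_trans.
  { apply Rmult_le_compat_r; auto.
    eapply Rle_trans; [apply Cmod_triangle|]. apply Rplus_le_compat_r. apply Cmod_triangle. }
  rewrite Cmod_conj. fold nR. unfold C2. lra.
Qed.

Lemma laurent_model : exists (E e1 e2 : C -> C) (rs C0 C1 C2 : R),
  0 < rs <= 1 /\ rs <= r /\ 0 <= C0 /\ 0 <= C1 /\ 0 <= C2 /\
  (forall z, 0 < Cmod (z - z0) <= rs ->
     f z = (an / (z - z0) ^ n + Cconj bn / (Cconj (z - z0)) ^ n + k0 + E (z - z0))%C) /\
  (forall u, 0 < Cmod u <= rs -> Cmod (E u) * Cmod u ^ n <= C0 * sqrt (Cmod u)) /\
  (forall u, 0 < Cmod u <= rs ->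
     Cmod (e1 u) * Cmod u ^ S n <= C1 * sqrt (Cmod u) /\
     Cmod (e2 u) * Cmod u ^ S n <= C1 * sqrt (Cmod u)) /\
  (forall s u v, 0 < s -> 2 * s <= rs ->
     s / 2 <= Cmod u <= 2 * s -> s / 2 <= Cmod v <= 2 * s -> Cmod (v - u) <= s / 8 ->
     Cmod (E v - E u - e1 u * (v - u) - e2 u * Cconj (v - u)) * s ^ (n + 2)
       <= C2 * Cmod (v - u) ^ 2).
Proof.
  destruct laurent_constants as (HR & Hrs & Hrs2 & HDP & HKP & HDQ & HKQ).
  assert (HnR : 1 <= nR) by (apply (le_INR 1); auto).
  assert (HA := Cmod_ge_0 A). assert (Ha0 := Cmod_ge_0 (a 0%Z)). assert (Hb0 := Cmod_ge_0 (b 0%Z)).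
  assert (Hp : forall k, 0 <= 2 ^ k) by (intros; apply pow_le; lra).
  exists E, e1, e2, rs, C0, C1, C2.
  split; [lra|]. split; [unfold rdisc in *; lra|].
  split; [unfold C0, LP, LQ; lra|]. split; [unfold C1, LP, LQ; nra|].
  split.
  { assert (Hq : forall L D K, 0 <= L -> 0 <= D -> 0 <= K ->
      0 <= (nR ^ 2 + nR) * 2 ^ (n + 3) * L + nR * 2 ^ (n + 1) * (D + K) + 2 ^ n * K).
    { intros L D K HL HD HK. assert (0 <= nR ^ 2 + nR) by nra.
      assert (H1 := Hp (n + 3)%nat). assert (H2 := Hp (n + 1)%nat). assert (H3 := Hp n).
      repeat apply Rplus_le_le_0_compat; repeat apply Rmult_le_pos; lra. }
    assert (HqP := Hq LP DP KP ltac:(unfold LP; lra) HDP HKP).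
    assert (HqQ := Hq LQ DQ KQ ltac:(unfold LQ; lra) HDQ HKQ).
    unfold C2. lra. }
  split; [exact laurent_model_eq|].
  split; [exact laurent_E_bound|].
  split; [exact laurent_e_bound|].
  exact laurent_E_taylor.
Qed.

End Laurent.

Theorem theorem3p2 (z0 : C) (r : R) (f : C -> C) (n : nat) (a b : Z -> C)
  (A : C) (hr : 0 < r) (hn : (1 <= n)%nat)
  (hab : Cmod (a (- Z.of_nat n)%Z) <> Cmod (b (- Z.of_nat n)%Z))
  (hf : forall z, 0 < Cmod (Cminus z z0) < r ->
     exists sa sb : C,
       is_series (V := C_NormedModule) (laurent_term a n (Cminus z z0)) sa /\
       is_series (V := C_NormedModule) (laurent_term b n (Cminus z z0)) sb /\
       f z = Cplus (Cplus sa (Cconj sb))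
                   (Cmult (Cmult (RtoC 2) A) (RtoC (ln (Cmod (Cminus z z0)))))) :
  exists rho : R, 0 < rho <= r /\
  exists R0 : R, forall eta : C,
    let c := Cminus eta (Cplus (a 0%Z) (Cconj (b 0%Z))) in
    R0 < Cmod c ->
    let w := Cdiv (RtoC ((Cmod (a (- Z.of_nat n)%Z))^2 - (Cmod (b (- Z.of_nat n)%Z))^2))
                  (Cminus (Cmult (Cconj (a (- Z.of_nat n)%Z)) c)
                          (Cmult (Cconj (b (- Z.of_nat n)%Z)) (Cconj c))) in
    let F := fun z => Cminus (f z) eta in
    (* (1) exactly n solutions of f z = eta in the punctured disc of radius rho *)
    (exists sols : list C, length sols = n /\ NoDup sols /\
       forall z, In z sols <-> (0 < Cmod (Cminus z z0) < rho /\ f z = eta)) /\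
    (* (2) S = {zeta | (zeta - z0)^n = w} is a prediction set *)
    (forall zeta, Cpow (Cminus zeta z0) n = w ->
       exists L, HN_converges_to F zeta L /\
                 0 < Cmod (Cminus L z0) < rho /\ f L = eta) /\
    (forall zeta1 zeta2 L,
       Cpow (Cminus zeta1 z0) n = w -> Cpow (Cminus zeta2 z0) n = w ->
       HN_converges_to F zeta1 L -> HN_converges_to F zeta2 L -> zeta1 = zeta2) /\
    (forall z, 0 < Cmod (Cminus z z0) < rho -> f z = eta ->
       exists zeta, Cpow (Cminus zeta z0) n = w /\ HN_converges_to F zeta z).
Proof.
  destruct (laurent_model z0 r f n a b A hr hn hf)
    as (E & e1 & e2 & rs & C0 & C1 & C2 & Hrs & Hrsr & HC0 & HC1 & HC2 & Hmodel & HE & He & HEt).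
  destruct (model_solutions z0 f n (a (- Z.of_nat n)%Z) (b (- Z.of_nat n)%Z)
              (Cplus (a 0%Z) (Cconj (b 0%Z))) E e1 e2 rs C0 C1 C2
              hn hab Hrs HC0 HC1 HC2 Hmodel HE He HEt) as [rho [Hrho [R0 HR0]]].
  exists rho. split; [lra|]. exists R0. exact HR0.
Qed.
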